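(* Let $s\subseteq\mathcal{H}$ be a nonzero subspace with orthogonal projector $\mathcal{P}$, let $\rho=\mathcal{P}/\dim s$, and let $r=\dim s\,(1+R_g(\rho))$. Then for every density matrix $\sigma''$ whose support equals $s$, $$r\ \ge\ 2^{E_R(\sigma'')+S(\sigma'')}\ \ge\ 2^{G(\sigma'')}.$$
   Context: $\mathcal{H}=\mathcal{H}_1\otimes\cdots\otimes\mathcal{H}_m$ is finite-dimensional. A state is separable if it is a convex combination of product states; $\mathfrak{S}$ is the set of separable density matrices. Global robustness: $R_g(\sigma)=\min\{t\ge0:\exists$ a density matrix $\varrho$ with $(\sigma+t\varrho)/(1+t)\in\mathfrak{S}\}$. $E_R(\sigma)=\min_{\omega\in\mathfrak{S}}\mathrm{Tr}\,\sigma(\log_2\sigma-\log_2\omega)$; $S(\sigma)=-\mathrm{Tr}\,\sigma\log_2\sigma$; $G(\sigma)=-\log_2\max\langle\phi|\sigma|\phi\rangle$ over unit product vectors $|\phi\rangle=|\phi_1\rangle\otimes\cdots\otimes|\phi_m\rangle$. The support of a density matrix is the span of its eigenvectors with nonzero eigenvalues. *)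

From Stdlib Require Import Reals List ClassicalEpsilon.
Open Scope R_scope.

Record C := mkC { re : R ; im : R }.
Definition C0 : C := mkC 0 0.
Definition C1 : C := mkC 1 0.
Definition RtoC (x : R) : C := mkC x 0.
Definition Cadd (a b : C) : C := mkC (re a + re b) (im a + im b).
Definition Copp (a : C) : C := mkC (- re a) (- im a).
Definition Csub (a b : C) : C := Cadd a (Copp b).
Definition Cmul (a b : C) : C :=
  mkC (re a * re b - im a * im b) (re a * im b + im a * re b).
Definition Cconj (a : C) : C := mkC (re a) (- im a).
Definition Cnorm2 (a : C) : R := re a * re a + im a * im a.

Fixpoint csum (n : nat) (f : nat -> C) : C :=
  match n with O => C0 | S n' => Cadd (csum n' f) (f n') end.
Fixpoint rsum (n : nat) (f : nat -> R) : R :=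
  match n with O => 0 | S n' => rsum n' f + f n' end.

(** * Vectors and matrices of dimension n: only indices < n are relevant. *)
Definition vec := nat -> C.
Definition mat := nat -> nat -> C.

Definition vec_eq (n : nat) (u v : vec) : Prop := forall i, (i < n)%nat -> u i = v i.
Definition mat_eq (n : nat) (A B : mat) : Prop :=
  forall i j, (i < n)%nat -> (j < n)%nat -> A i j = B i j.

Definition inner (n : nat) (u v : vec) : C := csum n (fun i => Cmul (Cconj (u i)) (v i)).
Definition mat_vec (n : nat) (A : mat) (v : vec) : vec := fun i => csum n (fun j => Cmul (A i j) (v j)).
Definition mat_mul (n : nat) (A B : mat) : mat := fun i j => csum n (fun k => Cmul (A i k) (B k j)).
Definition mat_add (A B : mat) : mat := fun i j => Cadd (A i j) (B i j).
Definition mat_sub (A B : mat) : mat := fun i j => Csub (A i j) (B i j).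
Definition mat_scale (c : C) (A : mat) : mat := fun i j => Cmul c (A i j).
Definition trace (n : nat) (A : mat) : C := csum n (fun i => A i i).
Definition outer (u v : vec) : mat := fun i j => Cmul (u i) (Cconj (v j)).

Definition unit_vec (n : nat) (v : vec) : Prop := rsum n (fun i => Cnorm2 (v i)) = 1.

Definition orthonormal (n k : nat) (e : nat -> vec) : Prop :=
  forall a b, (a < k)%nat -> (b < k)%nat ->
    inner n (e a) (e b) = if Nat.eqb a b then C1 else C0.

Definition hermitian (n : nat) (A : mat) : Prop :=
  forall i j, (i < n)%nat -> (j < n)%nat -> A i j = Cconj (A j i).
Definition psd (n : nat) (A : mat) : Prop :=
  forall v : vec, 0 <= re (inner n v (mat_vec n A v)).
Definition density (n : nat) (A : mat) : Prop :=
  hermitian n A /\ psd n A /\ trace n A = C1.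

Definition in_span (n k : nat) (e : nat -> vec) (v : vec) : Prop :=
  exists c : nat -> C, vec_eq n v (fun i => csum k (fun j => Cmul (c j) (e j i))).

Definition in_support (n : nat) (A : mat) (v : vec) : Prop :=
  exists (N : nat) (u : nat -> vec) (lam : nat -> C) (c : nat -> C),
    (forall j, (j < N)%nat -> lam j <> C0 /\
        vec_eq n (mat_vec n A (u j)) (fun i => Cmul (lam j) (u j i))) /\
    vec_eq n v (fun i => csum N (fun j => Cmul (c j) (u j i))).

Definition spectral_decomp (n : nat) (A : mat) (b : nat -> vec) (q : nat -> R) : Prop :=
  orthonormal n n b /\
  mat_eq n A (fun i l => csum n (fun j => Cmul (RtoC (q j)) (outer (b j) (b j) i l))).

Definition log2 (x : R) : R := ln x / ln 2.

(** L = log2 A, with the usual convention that log acts on the support of A *)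
Definition is_log2_mat (n : nat) (A L : mat) : Prop :=
  exists b q, spectral_decomp n A b q /\
   mat_eq n L (fun i l => csum n (fun j =>
      Cmul (RtoC (if Rlt_dec 0 (q j) then log2 (q j) else 0)) (outer (b j) (b j) i l))).

Definition is_glb (E : R -> Prop) (m : R) : Prop :=
  (forall x, E x -> m <= x) /\ (forall y, (forall x, E x -> y <= x) -> y <= m).
Definition Inf (E : R -> Prop) : R := epsilon (inhabits 0) (is_glb E).
Definition Sup (E : R -> Prop) : R := epsilon (inhabits 0) (is_lub E).
Definition the_real (P : R -> Prop) : R := epsilon (inhabits 0) P.

(** * Multipartite structure: H = C^{d_1} (x) ... (x) C^{d_m}, ds = [d_1; ...; d_m] *)
Fixpoint dimprod (ds : list nat) : nat :=
  match ds with nil => 1%nat | d :: ds' => (d * dimprod ds')%nat end.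

(** product vector phi_0 (x) ... (x) phi_{m-1}; phis i is the vector of party i *)
Fixpoint prod_vec (ds : list nat) (phis : nat -> vec) : vec :=
  match ds with
  | nil => fun k => if Nat.eqb k 0 then C1 else C0
  | d :: ds' => fun k =>
      Cmul (phis O (Nat.div k (dimprod ds')))
           (prod_vec ds' (fun i => phis (S i)) (Nat.modulo k (dimprod ds')))
  end.

Fixpoint prod_mat (ds : list nat) (rhos : nat -> mat) : mat :=
  match ds with
  | nil => fun k l => if andb (Nat.eqb k 0) (Nat.eqb l 0) then C1 else C0
  | d :: ds' => fun k l =>
      Cmul (rhos O (Nat.div k (dimprod ds')) (Nat.div l (dimprod ds')))
           (prod_mat ds' (fun i => rhos (S i))
              (Nat.modulo k (dimprod ds')) (Nat.modulo l (dimprod ds')))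
  end.

Definition separable (ds : list nat) (w : mat) : Prop :=
  density (dimprod ds) w /\
  exists (N : nat) (p : nat -> R) (rhos : nat -> nat -> mat),
    (forall j, (j < N)%nat -> 0 <= p j) /\ rsum N p = 1 /\
    (forall j i, (j < N)%nat -> (i < length ds)%nat -> density (nth i ds O) (rhos j i)) /\
    mat_eq (dimprod ds) w
      (fun a b => csum N (fun j => Cmul (RtoC (p j)) (prod_mat ds (rhos j) a b))).

Definition Rg (ds : list nat) (sigma : mat) : R :=
  Inf (fun t => 0 <= t /\ exists rho, density (dimprod ds) rho /\
        separable ds (mat_scale (RtoC (/ (1 + t))) (mat_add sigma (mat_scale (RtoC t) rho)))).

Definition vN_entropy (n : nat) (sigma : mat) : R :=
  the_real (fun x => exists L, is_log2_mat n sigma L /\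
                     x = - re (trace n (mat_mul n sigma L))).

(** relative entropy of entanglement: min over separable omega of
    Tr sigma (log2 sigma - log2 omega); only omega with supp sigma <= supp omega
    give a finite value, so the minimum is over those. *)
Definition E_R (ds : list nat) (sigma : mat) : R :=
  Inf (fun x => exists w, separable ds w /\
        (forall v, in_support (dimprod ds) sigma v -> in_support (dimprod ds) w v) /\
        exists Ls Lw, is_log2_mat (dimprod ds) sigma Ls /\ is_log2_mat (dimprod ds) w Lw /\
          x = re (trace (dimprod ds) (mat_mul (dimprod ds) sigma (mat_sub Ls Lw)))).

Definition G_measure (ds : list nat) (sigma : mat) : R :=
  - log2 (Sup (fun x => exists phis : nat -> vec,
        (forall i, (i < length ds)%nat -> unit_vec (nth i ds O) (phis i)) /\
        x = re (inner (dimprod ds) (prod_vec ds phis)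
                  (mat_vec (dimprod ds) sigma (prod_vec ds phis))))).

Definition projector (k : nat) (e : nat -> vec) : mat :=
  fun a b => csum k (fun j => outer (e j) (e j) a b).

(* For a separable ω = Σ_j p_j |c_j><c_j| whose support contains supp σ,
   the numbers a_j = <c_j|σ|c_j> form a probability vector vanishing where
   p_j does, and  Tr σ(log σ - log ω) + S(σ) = - Σ_j a_j log p_j.
   - Robustness bound: if ω = (ρ + tτ)/(1+t) is separable then
     ω ≥ P/(k(1+t)), so supp σ = s ⊆ supp ω and Σ_j a_j/p_j ≤ k(1+t).
     Concavity of log gives - Σ_j a_j log p_j ≤ log Σ_j a_j/p_j, hence
     2^(E_R+S) ≤ k(1+t), and taking the infimum over t gives r.
   - Geometric bound: concavity also gives - Σ_j a_j log p_j ≥ - log Tr σω,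
     and Tr σω ≤ max_φ <φ|σ|φ> over product vectors φ because ω is a
     convex combination of product states; hence E_R + S ≥ G. *)

From Stdlib Require Import Reals List Lra Lia ClassicalEpsilon.
From Pilot Require Import Defs.
From mathcomp Require ssreflect ssrfun ssrbool eqtype ssrnat fintype bigop
  ssralg ssrnum matrix sesquilinear spectral complex Rstruct.
Open Scope R_scope.

Module SpectralBridge.
Import ssreflect ssrfun ssrbool eqtype ssrnat fintype bigop ssralg ssrnum
  matrix sesquilinear spectral complex Rstruct.
Import GRing.Theory Num.Theory.
Local Open Scope ring_scope.
Local Open Scope complex_scope.

Definition toc (z : C) : R[i] := Complex (re z) (im z).
Definition ofc (z : R[i]) : C := mkC (complex.Re z) (complex.Im z).
Lemma tocK z : ofc (toc z) = z. Proof. by case: z. Qed.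
Lemma ofcK z : toc (ofc z) = z. Proof. by case: z. Qed.
Lemma toc_add a b : toc (Cadd a b) = toc a + toc b. Proof. by []. Qed.
Lemma toc_mul a b : toc (Cmul a b) = toc a * toc b. Proof. by []. Qed.
Lemma toc_conj a : toc (Cconj a) = Num.conj (toc a). Proof. by []. Qed.
Lemma toc_R x : toc (RtoC x) = x%:C. Proof. by []. Qed.

Lemma toc_inj a b : toc a = toc b -> a = b.
Proof. by move=> H; rewrite -(tocK a) H tocK. Qed.

Lemma toc_csum n f : toc (csum n f) = \sum_(j < n) toc (f j).
Proof.
elim: n => [|n IH] /=; first by rewrite big_ord0.
by rewrite toc_add IH big_ord_recr.
Qed.

Lemma eqb_ord n (a c : nat) : (a < n.+1)%N -> (c < n.+1)%N ->
  ((inord a : 'I_n.+1) == inord c) = Nat.eqb a c.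
Proof. by move=> Ha Hc; rewrite -(inj_eq val_inj) /= !inordK. Qed.

Lemma toc_if (bb : bool) : toc (if bb then C1 else C0) = bb%:R.
Proof. by case: bb. Qed.

Lemma hermitian_spectral_decomp n (A : mat) :
  Defs.hermitian n A -> exists b q, Defs.spectral_decomp n A b q.
Proof.
case: n => [|n] HA.
  exists (fun _ _ => C0), (fun _ => 0%R); split => [a c Ha|i j Hi];
    exfalso; [exact: (PeanoNat.Nat.nlt_0_r _ Ha)|exact: (PeanoNat.Nat.nlt_0_r _ Hi)].
pose MA : 'M[R[i]]_n.+1 := \matrix_(i, j) toc (A i j).
have Hh : MA \is hermsymmx.
  rewrite is_hermitianmxE expr0 scale1r; apply/eqP/matrixP => i j; rewrite !mxE.
  by rewrite {1}HA //; apply/ltP.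
have /hermitian_normalmx/orthomx_spectralP E := Hh.
set P := spectralmx MA in E; set D := spectral_diag MA in E.
have PU : P \is unitarymx := spectral_unitarymx MA.
have Dreal := hermitian_spectral_diag_real Hh.
rewrite invmx_unitary // in E.
pose b := fun (j i : nat) => ofc (Num.conj (P (inord j) (inord i))).
pose q := fun j : nat => complex.Re (D ord0 (inord j)).
exists b, q; split.
- move=> a c Ha Hc; apply: toc_inj; rewrite toc_csum toc_if.
  have Ha' : (a < n.+1)%N by apply/ltP.
  have Hc' : (c < n.+1)%N by apply/ltP.
  have := unitarymxP PU; move/matrixP => /(_ (inord a) (inord c)).
  rewrite !mxE (@eqb_ord n) // => <-.
  by apply: eq_bigr => i _; rewrite toc_mul toc_conj /b !ofcK conjCK !mxE inord_val.
- move=> i l Hi Hl; apply: toc_inj; rewrite toc_csum.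
  have Hi' : (i < n.+1)%N by apply/ltP.
  have Hl' : (l < n.+1)%N by apply/ltP.
  have -> : toc (A i l) = MA (inord i) (inord l) by rewrite mxE !inordK.
  rewrite E mul_mx_diag !mxE; apply: eq_bigr => j _.
  rewrite !mxE /outer !toc_mul toc_conj toc_R /b /q !ofcK conjCK inord_val.
  have : D ord0 j \is Num.real by apply: (mxOverP Dreal).
  case: (D ord0 j) => x y; rewrite complex_real => /eqP -> /=.
  rewrite -[Complex x 0]/(x%:C).
  by rewrite mulrA [_ * x%:C]mulrC.
Qed.

Lemma orthonormal_complete n (b : nat -> vec) : Defs.orthonormal n n b ->
  forall i l, (i < n)%coq_nat -> (l < n)%coq_nat ->
  csum n (fun j => Cmul (b j i) (Cconj (b j l))) = if Nat.eqb i l then C1 else C0.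
Proof.
case: n => [|n] Hb i l Hi Hl; first by exfalso; apply: (PeanoNat.Nat.nlt_0_r i).
pose P : 'M[R[i]]_n.+1 := \matrix_(j, i) Num.conj (toc (b j i)).
have PU : P \is unitarymx.
  apply/unitarymxP/matrixP => a c; rewrite !mxE.
  have := Hb a c (ltP (ltn_ord a)) (ltP (ltn_ord c)).
  move=> /(congr1 toc); rewrite toc_csum toc_if.
  have -> : Nat.eqb a c = (a == c) by rewrite -(inj_eq val_inj).
  by move=> <-; apply: eq_bigr => k _; rewrite !mxE toc_mul toc_conj conjCK.
have Hi' : (i < n.+1)%N by apply/ltP.
have Hl' : (l < n.+1)%N by apply/ltP.
rewrite -trmxC_unitary in PU.
have := unitarymxP PU; rewrite trmxCK => /matrixP /(_ (inord i) (inord l)).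
rewrite !mxE eqb_ord // => H; apply: toc_inj; rewrite toc_csum toc_if -H.
by apply: eq_bigr => j _; rewrite !mxE conjCK toc_mul toc_conj !inordK // mulrC.
Qed.
End SpectralBridge.

Definition hermitian_spectral_decomp := SpectralBridge.hermitian_spectral_decomp.
Definition orthonormal_complete := SpectralBridge.orthonormal_complete.

Lemma C_eq a b : re a = re b -> im a = im b -> a = b.
Proof. destruct a, b; simpl; intros; subst; reflexivity. Qed.
Ltac csolve := apply C_eq; simpl; ring.

Lemma Cnorm2_nonneg z : 0 <= Cnorm2 z.
Proof. unfold Cnorm2. nra. Qed.

Lemma Cnorm2_conj z : Cnorm2 (Cconj z) = Cnorm2 z.
Proof. unfold Cnorm2; simpl; ring. Qed.

Lemma Cnorm2_mul a b : Cnorm2 (Cmul a b) = Cnorm2 a * Cnorm2 b.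
Proof. unfold Cnorm2; simpl; ring. Qed.

Lemma Cnorm2_zero z : Cnorm2 z = 0 -> z = C0.
Proof.
  destruct z as [a b]; unfold Cnorm2; simpl; intros.
  assert (a * a = 0) by nra. assert (b * b = 0) by nra.
  apply Rmult_integral in H0. apply Rmult_integral in H1.
  assert (a = 0) by tauto. assert (b = 0) by tauto. subst. reflexivity.
Qed.

Lemma Cmul_eq0 a z : a <> C0 -> Cmul a z = C0 -> z = C0.
Proof.
  intros Ha Hz. destruct a as [ar ai], z as [zr zi]. unfold Cmul in Hz; simpl in Hz.
  injection Hz; intros H1 H2.
  assert (Hn : ar * ar + ai * ai <> 0).
  { intro. apply Ha. apply Cnorm2_zero. exact H. }
  assert (E1 : (ar*ar+ai*ai)*zr = ar*(ar*zr - ai*zi) + ai*(ar*zi + ai*zr)) by ring.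
  assert (E2 : (ar*ar+ai*ai)*zi = ar*(ar*zi + ai*zr) - ai*(ar*zr - ai*zi)) by ring.
  rewrite H1, H2 in E1, E2.
  apply C_eq; simpl; apply (Rmult_eq_reg_l (ar*ar+ai*ai)); lra.
Qed.

Lemma RtoC_neq0 x : x <> 0 -> RtoC x <> C0.
Proof. intros H E. apply H. apply (f_equal re) in E. exact E. Qed.

Lemma re_Cadd a b : re (Cadd a b) = re a + re b.
Proof. reflexivity. Qed.

Lemma re_RtoC_mul c z : re (Cmul (RtoC c) z) = c * re z.
Proof. simpl; ring. Qed.

Lemma rsum_ext n f g : (forall i, (i < n)%nat -> f i = g i) -> rsum n f = rsum n g.
Proof. induction n; simpl; intros; auto. rewrite IHn, H; auto. Qed.
Lemma rsum_plus n f g : rsum n (fun i => f i + g i) = rsum n f + rsum n g.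
Proof. induction n; simpl; [ring|rewrite IHn; ring]. Qed.
Lemma rsum_minus n f g : rsum n (fun i => f i - g i) = rsum n f - rsum n g.
Proof. induction n; simpl; [ring|rewrite IHn; ring]. Qed.
Lemma rsum_scal n c f : rsum n (fun i => c * f i) = c * rsum n f.
Proof. induction n; simpl; [ring|rewrite IHn; ring]. Qed.
Lemma rsum_0 n : rsum n (fun _ => 0) = 0.
Proof. induction n; simpl; [ring|rewrite IHn; ring]. Qed.
Lemma rsum_const n c : rsum n (fun _ => c) = INR n * c.
Proof. induction n; simpl rsum; [simpl; ring|rewrite IHn, S_INR; ring]. Qed.
Lemma rsum_opp n f : rsum n (fun i => - f i) = - rsum n f.
Proof. rewrite (rsum_ext n _ (fun i => -1 * f i)) by (intros; ring). rewrite rsum_scal. ring. Qed.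
Lemma rsum_le n f g : (forall i, (i < n)%nat -> f i <= g i) -> rsum n f <= rsum n g.
Proof.
  induction n; simpl; intros; [lra|].
  pose proof (H n ltac:(lia)). assert (rsum n f <= rsum n g) by auto. lra.
Qed.
Lemma rsum_nonneg n f : (forall i, (i < n)%nat -> 0 <= f i) -> 0 <= rsum n f.
Proof. intros. rewrite <- (rsum_0 n). apply rsum_le; auto. Qed.
Lemma rsum_swap n m (f : nat -> nat -> R) :
  rsum n (fun i => rsum m (fun j => f i j)) = rsum m (fun j => rsum n (fun i => f i j)).
Proof. induction n; simpl. rewrite rsum_0; auto. rewrite IHn, <- rsum_plus. auto. Qed.
Lemma rsum_single n a (f : nat -> R) : (a < n)%nat ->
  rsum n (fun i => if Nat.eqb i a then f i else 0) = f a.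
Proof.
  induction n; intros; [lia|simpl].
  destruct (Nat.eqb_spec n a).
  - subst. rewrite (rsum_ext _ _ (fun _ => 0)). rewrite rsum_0; ring.
    intros. destruct (Nat.eqb_spec i a); [lia|auto].
  - rewrite IHn by lia. ring.
Qed.
Lemma rsum_term_le n f a : (forall i, (i < n)%nat -> 0 <= f i) -> (a < n)%nat -> f a <= rsum n f.
Proof.
  intros. rewrite <- (rsum_single n a f) by auto. apply rsum_le. intros.
  destruct (Nat.eqb_spec i a); [lra|auto].
Qed.
Lemma rsum_zero_each n f : (forall i, (i < n)%nat -> 0 <= f i) -> rsum n f <= 0 ->
  forall i, (i < n)%nat -> f i = 0.
Proof. intros. pose proof (rsum_term_le n f i H H1). pose proof (H i H1). lra. Qed.
Lemma rsum_app a b f : rsum (a + b) f = rsum a f + rsum b (fun i => f (a + i)%nat).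
Proof.
  induction b; simpl. rewrite Nat.add_0_r; ring.
  rewrite Nat.add_succ_r; simpl. rewrite IHb; ring.
Qed.
Lemma rsum_mul d N f : rsum (d * N) f = rsum d (fun a => rsum N (fun x => f (a * N + x)%nat)).
Proof.
  induction d; simpl; auto.
  replace (N + d * N)%nat with (d * N + N)%nat by lia. rewrite rsum_app, IHd. auto.
Qed.

Lemma re_csum n f : re (csum n f) = rsum n (fun i => re (f i)).
Proof. induction n; simpl; auto. rewrite IHn; auto. Qed.
Lemma im_csum n f : im (csum n f) = rsum n (fun i => im (f i)).
Proof. induction n; simpl; auto. rewrite IHn; auto. Qed.
Lemma csum_ext n f g : (forall i, (i < n)%nat -> f i = g i) -> csum n f = csum n g.
Proof. induction n; simpl; intros; auto. rewrite IHn, H; auto. Qed.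
Lemma csum_plus n f g : csum n (fun i => Cadd (f i) (g i)) = Cadd (csum n f) (csum n g).
Proof. apply C_eq; simpl; rewrite ?re_csum, ?im_csum; simpl; apply rsum_plus. Qed.
Lemma csum_scal n c f : csum n (fun i => Cmul c (f i)) = Cmul c (csum n f).
Proof.
  apply C_eq; simpl; rewrite ?re_csum, ?im_csum; simpl;
  rewrite <- !rsum_scal, <- ?rsum_minus, <- ?rsum_plus; apply rsum_ext; intros; ring.
Qed.
Lemma csum_scal_r n c f : csum n (fun i => Cmul (f i) c) = Cmul (csum n f) c.
Proof.
  rewrite (csum_ext n _ (fun i => Cmul c (f i))) by (intros; csolve).
  rewrite csum_scal. csolve.
Qed.
Lemma csum_0 n : csum n (fun _ => C0) = C0.
Proof. induction n; simpl; auto. rewrite IHn. csolve. Qed.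
Lemma csum_C1 k : csum k (fun _ => C1) = RtoC (INR k).
Proof. apply C_eq; rewrite ?re_csum, ?im_csum; simpl. rewrite rsum_const; ring. apply rsum_0. Qed.
Lemma csum_swap n m (f : nat -> nat -> C) :
  csum n (fun i => csum m (fun j => f i j)) = csum m (fun j => csum n (fun i => f i j)).
Proof.
  apply C_eq; rewrite ?re_csum, ?im_csum;
  rewrite (rsum_ext _ _ (fun i => rsum m (fun j => _ (f i j))))
    by (intros; rewrite ?re_csum, ?im_csum; auto);
  rewrite rsum_swap; apply rsum_ext; intros; rewrite ?re_csum, ?im_csum; auto.
Qed.
Lemma csum_single n a (f : nat -> C) : (a < n)%nat ->
  csum n (fun i => if Nat.eqb i a then f i else C0) = f a.
Proof.
  intros. apply C_eq; rewrite ?re_csum, ?im_csum.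
  - rewrite (rsum_ext _ _ (fun i => if Nat.eqb i a then re (f i) else 0)).
    apply rsum_single; auto. intros; destruct (Nat.eqb i a); auto.
  - rewrite (rsum_ext _ _ (fun i => if Nat.eqb i a then im (f i) else 0)).
    apply rsum_single; auto. intros; destruct (Nat.eqb i a); auto.
Qed.
Lemma csum_mul d N f : csum (d * N) f = csum d (fun a => csum N (fun x => f (a * N + x)%nat)).
Proof.
  apply C_eq; rewrite ?re_csum, ?im_csum, rsum_mul; apply rsum_ext; intros;
  rewrite ?re_csum, ?im_csum; auto.
Qed.
Lemma Cconj_csum n f : Cconj (csum n f) = csum n (fun i => Cconj (f i)).
Proof.
  apply C_eq; simpl; rewrite ?re_csum, ?im_csum; simpl; auto.
  rewrite rsum_opp. ring.
Qed.

Definition norm2 n (v : vec) : R := rsum n (fun i => Cnorm2 (v i)).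

Lemma norm2_nonneg n v : 0 <= norm2 n v.
Proof. apply rsum_nonneg. intros. apply Cnorm2_nonneg. Qed.

Lemma inner_ext n u u' v v' : vec_eq n u u' -> vec_eq n v v' -> inner n u v = inner n u' v'.
Proof. intros. unfold inner. apply csum_ext. intros. rewrite H, H0; auto. Qed.

Lemma inner_conj n u v : inner n v u = Cconj (inner n u v).
Proof. unfold inner. rewrite Cconj_csum. apply csum_ext; intros; csolve. Qed.

Lemma re_inner_self n v : re (inner n v v) = norm2 n v.
Proof. unfold inner, norm2. rewrite re_csum. apply rsum_ext. intros. unfold Cnorm2. simpl. ring. Qed.

Lemma inner_lin_r n m u (c : nat -> C) (w : nat -> vec) :
  inner n u (fun i => csum m (fun j => Cmul (c j) (w j i))) =
  csum m (fun j => Cmul (c j) (inner n u (w j))).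
Proof.
  unfold inner.
  rewrite (csum_ext n _ (fun i => csum m (fun j => Cmul (c j) (Cmul (Cconj (u i)) (w j i))))).
  - rewrite csum_swap. apply csum_ext; intros; rewrite csum_scal; auto.
  - intros. rewrite <- csum_scal. apply csum_ext; intros; csolve.
Qed.

Lemma inner_lin_l n m v (c : nat -> C) (w : nat -> vec) :
  inner n (fun i => csum m (fun j => Cmul (c j) (w j i))) v =
  csum m (fun j => Cmul (Cconj (c j)) (inner n (w j) v)).
Proof.
  rewrite inner_conj, inner_lin_r, Cconj_csum. apply csum_ext. intros.
  rewrite (inner_conj n (w i) v). csolve.
Qed.

Lemma inner_scal_r n u c v : inner n u (fun i => Cmul c (v i)) = Cmul c (inner n u v).
Proof. unfold inner. rewrite <- csum_scal. apply csum_ext; intros; csolve. Qed.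
Lemma inner_scal_l n u c v : inner n (fun i => Cmul c (v i)) u = Cmul (Cconj c) (inner n v u).
Proof. unfold inner. rewrite <- csum_scal. apply csum_ext; intros; csolve. Qed.
Lemma inner_add_r n u v w : inner n u (fun i => Cadd (v i) (w i)) = Cadd (inner n u v) (inner n u w).
Proof. unfold inner. rewrite <- csum_plus. apply csum_ext; intros; csolve. Qed.
Lemma inner_add_l n u v w : inner n (fun i => Cadd (v i) (w i)) u = Cadd (inner n v u) (inner n w u).
Proof. unfold inner. rewrite <- csum_plus. apply csum_ext; intros; csolve. Qed.

Lemma mat_vec_ext n A B v v' : mat_eq n A B -> vec_eq n v v' -> vec_eq n (mat_vec n A v) (mat_vec n B v').
Proof. intros H H0 i Hi. unfold mat_vec. apply csum_ext. intros. rewrite H, H0; auto. Qed.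

Lemma trace_ext n A B A' B' : mat_eq n A A' -> mat_eq n B B' -> trace n (mat_mul n A B) = trace n (mat_mul n A' B').
Proof. intros. unfold trace, mat_mul. apply csum_ext; intros. apply csum_ext; intros. rewrite H, H0; auto. Qed.

Lemma inner_mscale n u c A v : inner n u (mat_vec n (mat_scale c A) v) = Cmul c (inner n u (mat_vec n A v)).
Proof.
  unfold mat_vec, mat_scale. rewrite <- inner_scal_r. apply inner_ext; [intros i _; auto|].
  intros i _. rewrite <- csum_scal. apply csum_ext; intros; csolve.
Qed.

Lemma inner_madd n u A B v : inner n u (mat_vec n (mat_add A B) v) =
  Cadd (inner n u (mat_vec n A v)) (inner n u (mat_vec n B v)).
Proof.
  unfold mat_vec, mat_add. rewrite <- inner_add_r. apply inner_ext; [intros i _; auto|].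
  intros i _. rewrite <- csum_plus. apply csum_ext; intros; csolve.
Qed.

Lemma trace_madd n A B : trace n (mat_add A B) = Cadd (trace n A) (trace n B).
Proof. unfold trace, mat_add. apply csum_plus. Qed.
Lemma trace_mscale n c A : trace n (mat_scale c A) = Cmul c (trace n A).
Proof. unfold trace, mat_scale. apply csum_scal. Qed.

Lemma trace_sub n A B C' : re (trace n (mat_mul n A (mat_sub B C'))) =
  re (trace n (mat_mul n A B)) - re (trace n (mat_mul n A C')).
Proof.
  unfold trace, mat_mul, mat_sub. rewrite !re_csum, <- rsum_minus. apply rsum_ext; intros.
  rewrite !re_csum, <- rsum_minus. apply rsum_ext; intros. simpl. ring.
Qed.

Lemma mat_vec_dyadic n m (M : mat) (a : nat -> C) (x y : nat -> vec) v :
  mat_eq n M (fun i l => csum m (fun j => Cmul (a j) (outer (x j) (y j) i l))) ->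
  vec_eq n (mat_vec n M v) (fun i => csum m (fun j => Cmul (Cmul (a j) (inner n (y j) v)) (x j i))).
Proof.
  intros H i Hi. unfold mat_vec.
  rewrite (csum_ext n _ (fun l => csum m (fun j => Cmul (Cmul (a j) (x j i)) (Cmul (Cconj (y j l)) (v l))))).
  - rewrite csum_swap. apply csum_ext; intros. rewrite csum_scal. unfold inner. csolve.
  - intros l Hl. rewrite H by auto. rewrite <- csum_scal_r. apply csum_ext; intros; unfold outer; csolve.
Qed.

Lemma inner_mat_vec_dyadic n m (M : mat) (a : nat -> C) (x y : nat -> vec) u v :
  mat_eq n M (fun i l => csum m (fun j => Cmul (a j) (outer (x j) (y j) i l))) ->
  inner n u (mat_vec n M v) = csum m (fun j => Cmul (Cmul (a j) (inner n (y j) v)) (inner n u (x j))).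
Proof.
  intros H. rewrite (inner_ext n u u _ _ (fun i j => eq_refl) (mat_vec_dyadic n m M a x y v H)).
  apply inner_lin_r.
Qed.

Lemma trace_mul_dyadic n m (A B : mat) (a : nat -> C) (x : nat -> vec) :
  mat_eq n B (fun i l => csum m (fun j => Cmul (a j) (outer (x j) (x j) i l))) ->
  trace n (mat_mul n A B) = csum m (fun j => Cmul (a j) (inner n (x j) (mat_vec n A (x j)))).
Proof.
  intros H. unfold trace, mat_mul.
  rewrite (csum_ext n _ (fun i => csum m (fun j => csum n (fun k =>
     Cmul (a j) (Cmul (Cconj (x j i)) (Cmul (A i k) (x j k))))))).
  - rewrite csum_swap. apply csum_ext; intros j Hj.
    unfold inner, mat_vec. rewrite <- csum_scal. apply csum_ext; intros i Hi.
    rewrite csum_scal. f_equal. rewrite csum_scal. auto.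
  - intros i Hi.
    rewrite (csum_ext n _ (fun k => csum m (fun j => Cmul (a j) (Cmul (Cconj (x j i)) (Cmul (A i k) (x j k)))))).
    + apply csum_swap.
    + intros k Hk. rewrite H by auto. rewrite <- csum_scal. apply csum_ext; intros; unfold outer; csolve.
Qed.

Lemma trace_mul_combination n N S W (pi : nat -> R) (P : nat -> mat) :
  mat_eq n W (fun a b => csum N (fun j => Cmul (RtoC (pi j)) (P j a b))) ->
  trace n (mat_mul n S W) = csum N (fun j => Cmul (RtoC (pi j)) (trace n (mat_mul n S (P j)))).
Proof.
  intros H. rewrite (trace_ext n S W S _ (fun i j _ _ => eq_refl) H). unfold trace, mat_mul.
  transitivity (csum n (fun i => csum N (fun j => csum n (fun k => Cmul (RtoC (pi j)) (Cmul (S i k) (P j k i)))))).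
  - apply csum_ext; intros i Hi.
    rewrite (csum_ext n _ (fun k => csum N (fun j => Cmul (RtoC (pi j)) (Cmul (S i k) (P j k i))))).
    + apply csum_swap.
    + intros k Hk. rewrite <- csum_scal. apply csum_ext; intros; csolve.
  - rewrite csum_swap. apply csum_ext; intros j Hj. rewrite <- csum_scal. apply csum_ext; intros i Hi.
    rewrite csum_scal. auto.
Qed.

Lemma basis_expansion n b v : orthonormal n n b ->
  vec_eq n v (fun i => csum n (fun j => Cmul (inner n (b j) v) (b j i))).
Proof.
  intros Hb i Hi. unfold inner.
  rewrite (csum_ext n _ (fun j => csum n (fun l => Cmul (v l) (Cmul (b j i) (Cconj (b j l)))))).
  - rewrite csum_swap.
    rewrite (csum_ext n _ (fun l => if Nat.eqb l i then v l else C0)).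
    + rewrite csum_single; auto.
    + intros l Hl. rewrite csum_scal. rewrite orthonormal_complete by auto.
      destruct (Nat.eqb_spec i l), (Nat.eqb_spec l i); subst; try lia; csolve.
  - intros j Hj. rewrite <- csum_scal_r. apply csum_ext; intros; csolve.
Qed.

Lemma parseval n b v : orthonormal n n b ->
  norm2 n v = rsum n (fun j => Cnorm2 (inner n (b j) v)).
Proof.
  intros Hb. rewrite <- re_inner_self.
  rewrite (inner_ext n v v v _ (fun i _ => eq_refl) (basis_expansion n b v Hb)).
  rewrite inner_lin_r, re_csum. apply rsum_ext. intros j Hj.
  rewrite (inner_conj n (b j) v). unfold Cnorm2. simpl. ring.
Qed.

Lemma orthonormal_coord n k e (g : nat -> C) j : orthonormal n k e -> (j < k)%nat ->
  inner n (e j) (fun i => csum k (fun m => Cmul (g m) (e m i))) = g j.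
Proof.
  intros He Hj. rewrite inner_lin_r.
  rewrite (csum_ext k _ (fun m => if Nat.eqb m j then g m else C0)).
  - apply csum_single; auto.
  - intros m Hm. rewrite He by auto.
    destruct (Nat.eqb_spec j m), (Nat.eqb_spec m j); subst; try lia; csolve.
Qed.

Lemma span_norm n k e v g : orthonormal n k e ->
  vec_eq n v (fun i => csum k (fun j => Cmul (g j) (e j i))) -> norm2 n v = rsum k (fun j => Cnorm2 (g j)).
Proof.
  intros He Hg. rewrite <- re_inner_self.
  rewrite (inner_ext n v _ v _ Hg (fun i _ => eq_refl)), inner_lin_l, re_csum.
  apply rsum_ext. intros j Hj.
  rewrite (inner_ext n (e j) (e j) v _ (fun i _ => eq_refl) Hg), orthonormal_coord by auto.
  unfold Cnorm2; simpl; ring.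
Qed.

Lemma span_orthogonal n k e v w : orthonormal n k e -> in_span n k e v ->
  (forall j, (j < k)%nat -> inner n w (e j) = C0) -> inner n w v = C0.
Proof.
  intros He [g Hg] Hw. rewrite (inner_ext n w w v _ (fun i _ => eq_refl) Hg), inner_lin_r.
  rewrite (csum_ext k _ (fun _ => C0)). apply csum_0. intros. rewrite Hw by auto. csolve.
Qed.

Lemma bessel n k e v : orthonormal n k e -> rsum k (fun j => Cnorm2 (inner n (e j) v)) <= norm2 n v.
Proof.
  intros He.
  set (s := rsum k (fun j => Cnorm2 (inner n (e j) v))).
  set (Pv := fun i => csum k (fun j => Cmul (inner n (e j) v) (e j i))).
  set (w := fun i => Cadd (v i) (Cmul (RtoC (-1)) (Pv i))).
  assert (Hw : 0 <= norm2 n w) by apply norm2_nonneg.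
  assert (HPvPv : re (inner n Pv Pv) = s).
  { rewrite re_inner_self. apply (span_norm n k e Pv (fun j => inner n (e j) v) He (fun i _ => eq_refl)). }
  assert (HvPv : re (inner n v Pv) = s).
  { unfold Pv at 1. rewrite inner_lin_r, re_csum. apply rsum_ext. intros j Hj.
    rewrite (inner_conj n (e j) v). unfold Cnorm2; simpl; ring. }
  assert (HPvv : re (inner n Pv v) = s).
  { rewrite inner_conj. simpl. rewrite HvPv. auto. }
  rewrite <- re_inner_self in Hw. unfold w in Hw.
  rewrite inner_add_l, !inner_add_r, !inner_scal_l, !inner_scal_r in Hw. simpl in Hw.
  rewrite re_inner_self in Hw. lra.
Qed.

Section Spectral.
Variables (n : nat) (A : mat) (b : nat -> vec) (q : nat -> R).
Hypothesis HSD : spectral_decomp n A b q.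

Lemma spec_orth a c : (a < n)%nat -> (c < n)%nat -> inner n (b a) (b c) = if Nat.eqb a c then C1 else C0.
Proof. destruct HSD. apply H. Qed.

Lemma spec_unit j : (j < n)%nat -> norm2 n (b j) = 1.
Proof. intros Hj. rewrite <- re_inner_self, spec_orth, Nat.eqb_refl by auto. reflexivity. Qed.

Lemma spec_mat_vec v : vec_eq n (mat_vec n A v)
  (fun i => csum n (fun j => Cmul (Cmul (RtoC (q j)) (inner n (b j) v)) (b j i))).
Proof. destruct HSD. apply (mat_vec_dyadic n n A (fun j => RtoC (q j)) b b v H0). Qed.

Lemma spec_coord j v : (j < n)%nat ->
  inner n (b j) (mat_vec n A v) = Cmul (RtoC (q j)) (inner n (b j) v).
Proof.
  intros Hj. rewrite (inner_ext n (b j) (b j) _ _ (fun i _ => eq_refl) (spec_mat_vec v)).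
  apply (orthonormal_coord n n b (fun m => Cmul (RtoC (q m)) (inner n (b m) v)) j); auto.
  destruct HSD; auto.
Qed.

Lemma spec_eigenvector j : (j < n)%nat -> vec_eq n (mat_vec n A (b j)) (fun i => Cmul (RtoC (q j)) (b j i)).
Proof.
  intros Hj i Hi. rewrite spec_mat_vec by auto.
  rewrite (csum_ext n _ (fun m => if Nat.eqb m j then Cmul (RtoC (q m)) (b m i) else C0)).
  - rewrite csum_single; auto.
  - intros m Hm. rewrite spec_orth by auto. destruct (Nat.eqb m j); csolve.
Qed.

Lemma spec_quadratic v : re (inner n v (mat_vec n A v)) = rsum n (fun j => q j * Cnorm2 (inner n (b j) v)).
Proof.
  destruct HSD as [_ Hm].
  rewrite (inner_mat_vec_dyadic n n A (fun j => RtoC (q j)) b b v v Hm), re_csum.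
  apply rsum_ext. intros j Hj. rewrite (inner_conj n (b j) v). unfold Cnorm2. simpl. ring.
Qed.

Lemma spec_eigenvalue j : (j < n)%nat -> re (inner n (b j) (mat_vec n A (b j))) = q j.
Proof.
  intros Hj. rewrite spec_quadratic.
  rewrite (rsum_ext n _ (fun m => if Nat.eqb m j then q m else 0)).
  - apply rsum_single; auto.
  - intros m Hm. rewrite spec_orth by auto. destruct (Nat.eqb m j); unfold Cnorm2; simpl; ring.
Qed.

Lemma spec_nonneg j : psd n A -> (j < n)%nat -> 0 <= q j.
Proof. intros Hp Hj. rewrite <- spec_eigenvalue by auto. apply Hp. Qed.

Lemma spec_trace : re (trace n A) = rsum n q.
Proof.
  destruct HSD as [Ho Hm]. unfold trace. rewrite re_csum.
  rewrite (rsum_ext n _ (fun i => rsum n (fun j => q j * Cnorm2 (b j i)))).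
  - rewrite rsum_swap. apply rsum_ext. intros j Hj.
    rewrite rsum_scal. fold (norm2 n (b j)). rewrite spec_unit by auto. ring.
  - intros i Hi. rewrite Hm by auto. rewrite re_csum. apply rsum_ext; intros.
    unfold outer, Cnorm2. simpl. ring.
Qed.

Lemma spec_sum1 : density n A -> rsum n q = 1.
Proof. intros [_ [_ Ht]]. rewrite <- spec_trace, Ht. reflexivity. Qed.

Lemma spec_le1 j : density n A -> (j < n)%nat -> q j <= 1.
Proof.
  intros Hd Hj. rewrite <- (spec_sum1 Hd). apply (rsum_term_le n q j); auto.
  intros; apply spec_nonneg; auto. destruct Hd as [_ [Hp _]]; auto.
Qed.

Lemma eigenvector_in_support l : (l < n)%nat -> q l <> 0 -> in_support n A (b l).
Proof.
  intros Hl Hq. exists 1%nat, (fun _ => b l), (fun _ => RtoC (q l)), (fun _ => C1). split.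
  - intros j Hj. split. apply RtoC_neq0; auto. apply (spec_eigenvector l Hl).
  - intros i Hi. simpl. csolve.
Qed.

Lemma kernel_orthogonal_support j v : (j < n)%nat -> q j = 0 -> in_support n A v -> inner n (b j) v = C0.
Proof.
  intros Hj Hq [N [u [lam [co [Hu Hv]]]]].
  rewrite (inner_ext n (b j) (b j) v _ (fun i _ => eq_refl) Hv), inner_lin_r.
  rewrite (csum_ext N _ (fun _ => C0)). apply csum_0.
  intros m Hm. destruct (Hu m Hm) as [Hl He].
  assert (Hz : inner n (b j) (u m) = C0).
  { apply (Cmul_eq0 (lam m)); auto.
    rewrite <- inner_scal_r, <- (inner_ext n (b j) (b j) _ _ (fun i _ => eq_refl) He).
    rewrite spec_coord, Hq by auto. csolve. }
  rewrite Hz. csolve.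
Qed.

End Spectral.

Definition log2_pos (x : R) : R := if Rlt_dec 0 x then log2 x else 0.
Definition xlog2x (x : R) : R := if Rlt_dec 0 x then x * log2 x else 0.

Lemma log2_pos_mul x : log2_pos x * x = xlog2x x.
Proof. unfold log2_pos, xlog2x. destruct (Rlt_dec 0 x); ring. Qed.

Lemma log2_mat_of_spectral n A b q : spectral_decomp n A b q ->
  is_log2_mat n A (fun i l => csum n (fun j => Cmul (RtoC (log2_pos (q j))) (outer (b j) (b j) i l))).
Proof. intros. exists b, q. split; auto. intros i l _ _. reflexivity. Qed.

Lemma eigenvalues_match n A b q c p l j : spectral_decomp n A b q -> spectral_decomp n A c p ->
  (l < n)%nat -> (j < n)%nat -> inner n (b l) (c j) <> C0 -> q l = p j.
Proof.
  intros Hb Hc Hl Hj Hz.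
  assert (E : Cmul (RtoC (q l)) (inner n (b l) (c j)) = Cmul (RtoC (p j)) (inner n (b l) (c j))).
  { rewrite <- (spec_coord n A b q Hb l (c j) Hl), <- inner_scal_r.
    apply inner_ext; [intros i _; auto|]. apply (spec_eigenvector n A c p Hc j Hj). }
  assert (Hd : RtoC (q l - p j) = C0).
  { apply (Cmul_eq0 (inner n (b l) (c j))); auto.
    pose proof (f_equal re E) as Er. pose proof (f_equal im E) as Ei. simpl in Er, Ei.
    apply C_eq; simpl; lra. }
  apply (f_equal re) in Hd. simpl in Hd. lra.
Qed.

Lemma trace_mul_spectral_fun n S W c p (f : R -> R) L : spectral_decomp n W c p ->
  mat_eq n L (fun i l => csum n (fun j => Cmul (RtoC (f (p j))) (outer (c j) (c j) i l))) ->
  re (trace n (mat_mul n S L)) = rsum n (fun j => f (p j) * re (inner n (c j) (mat_vec n S (c j)))).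
Proof.
  intros HSD HL. rewrite (trace_mul_dyadic n n S L (fun j => RtoC (f (p j))) c HL), re_csum.
  apply rsum_ext. intros. simpl. ring.
Qed.

Definition state_weight n (b : nat -> vec) (q : nat -> R) (c : nat -> vec) (j : nat) : R :=
  rsum n (fun l => q l * Cnorm2 (inner n (b l) (c j))).

Lemma state_weight_eq n S b q c j : spectral_decomp n S b q ->
  re (inner n (c j) (mat_vec n S (c j))) = state_weight n b q c j.
Proof. intros. apply (spec_quadratic n S b q H). Qed.

Lemma state_weight_nonneg n b q c j : (forall l, (l < n)%nat -> 0 <= q l) -> 0 <= state_weight n b q c j.
Proof.
  intros Hq. apply rsum_nonneg. intros l Hl.
  pose proof (Cnorm2_nonneg (inner n (b l) (c j))). pose proof (Hq l Hl). nra.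
Qed.

Lemma state_weight_sum n S b q c : density n S -> spectral_decomp n S b q -> orthonormal n n c ->
  rsum n (fun j => state_weight n b q c j) = 1.
Proof.
  intros Hd HS Hc. unfold state_weight. rewrite rsum_swap.
  rewrite <- (spec_sum1 n S b q HS Hd). apply rsum_ext. intros l Hl.
  rewrite rsum_scal. rewrite (rsum_ext n _ (fun j => Cnorm2 (inner n (c j) (b l)))).
  - rewrite <- (parseval n c (b l) Hc), (spec_unit n S b q HS l Hl). ring.
  - intros. rewrite inner_conj, Cnorm2_conj. auto.
Qed.

Lemma state_weight_kernel n S b q W c p j : spectral_decomp n S b q -> spectral_decomp n W c p ->
  (forall v, in_support n S v -> in_support n W v) -> (j < n)%nat -> p j = 0 ->
  state_weight n b q c j = 0.
Proof.
  intros HS HW Hsup Hj Hp. unfold state_weight. rewrite <- (rsum_0 n). apply rsum_ext. intros l Hl.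
  destruct (Req_dec (q l) 0) as [Hq|Hq]; [rewrite Hq; ring|].
  rewrite inner_conj, (kernel_orthogonal_support n W c p HW j (b l) Hj Hp).
  - unfold Cnorm2; simpl; ring.
  - apply Hsup. apply (eigenvector_in_support n S b q HS l Hl Hq).
Qed.

Lemma trace_self_log n S b q L : spectral_decomp n S b q -> is_log2_mat n S L ->
  re (trace n (mat_mul n S L)) = rsum n (fun l => xlog2x (q l)).
Proof.
  intros HS [c [p [HW HL]]].
  rewrite (trace_mul_spectral_fun n S S c p log2_pos L HW HL).
  rewrite (rsum_ext n _ (fun j => rsum n (fun l => log2_pos (p j) * (q l * Cnorm2 (inner n (b l) (c j)))))).
  2:{ intros j Hj. rewrite (state_weight_eq n S b q c j HS). unfold state_weight. rewrite <- rsum_scal. auto. }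
  rewrite rsum_swap. apply rsum_ext. intros l Hl.
  rewrite (rsum_ext n _ (fun j => xlog2x (q l) * Cnorm2 (inner n (c j) (b l)))).
  - rewrite rsum_scal, <- (parseval n c (b l)) by (destruct HW; auto).
    rewrite (spec_unit n S b q HS l Hl). ring.
  - intros j Hj. rewrite (inner_conj n (b l) (c j)), Cnorm2_conj.
    destruct (Req_dec (Cnorm2 (inner n (b l) (c j))) 0) as [Z|NZ].
    + rewrite Z. ring.
    + assert (Hz : inner n (b l) (c j) <> C0) by (intro E; rewrite E in NZ; apply NZ; unfold Cnorm2; simpl; ring).
      rewrite <- (eigenvalues_match n S b q c p l j HS HW Hl Hj Hz), <- log2_pos_mul. ring.
Qed.

Lemma vN_entropy_value n S b q : spectral_decomp n S b q ->
  vN_entropy n S = - rsum n (fun l => xlog2x (q l)).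
Proof.
  intros HS. unfold vN_entropy, the_real.
  match goal with |- epsilon ?i ?P = _ =>
    assert (Ex : exists x, P x); [|destruct (epsilon_spec i P Ex) as [L [HL ->]]] end.
  - eexists; eexists. split. apply (log2_mat_of_spectral n S b q HS). reflexivity.
  - rewrite (trace_self_log n S b q L HS HL). auto.
Qed.

Lemma rel_entropy_formula n S b q Ls W c p Lw : spectral_decomp n S b q -> is_log2_mat n S Ls ->
  spectral_decomp n W c p ->
  mat_eq n Lw (fun i l => csum n (fun j => Cmul (RtoC (log2_pos (p j))) (outer (c j) (c j) i l))) ->
  re (trace n (mat_mul n S (mat_sub Ls Lw))) + vN_entropy n S =
  - rsum n (fun j => log2_pos (p j) * state_weight n b q c j).
Proof.
  intros HS HLs HW HLw.
  rewrite trace_sub, (trace_self_log n S b q Ls HS HLs), (trace_mul_spectral_fun n S W c p log2_pos Lw HW HLw).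
  rewrite (vN_entropy_value n S b q HS).
  rewrite (rsum_ext n (fun j => log2_pos (p j) * re (inner n (c j) (mat_vec n S (c j))))
                     (fun j => log2_pos (p j) * state_weight n b q c j))
    by (intros j _; rewrite (state_weight_eq n S b q c j HS); auto).
  ring.
Qed.

Lemma ln2_pos : 0 < ln 2.
Proof. pose proof ln_lt_2. lra. Qed.

Lemma ln_le x y : 0 < x -> x <= y -> ln x <= ln y.
Proof. intros. destruct (Req_dec x y). subst; lra. left; apply ln_increasing; lra. Qed.

Lemma log2_le x y : 0 < x -> x <= y -> log2 x <= log2 y.
Proof.
  intros. unfold log2, Rdiv. apply Rmult_le_compat_r.
  - left. apply Rinv_0_lt_compat, ln2_pos.
  - apply ln_le; auto.
Qed.

Lemma log2_pos_nonpos x : x <= 1 -> log2_pos x <= 0.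
Proof.
  intros. unfold log2_pos. destruct (Rlt_dec 0 x); [|lra].
  rewrite <- (Rmult_0_l (/ ln 2)). unfold log2, Rdiv. apply Rmult_le_compat_r.
  - left. apply Rinv_0_lt_compat, ln2_pos.
  - rewrite <- ln_1. apply ln_le; lra.
Qed.

Lemma Rpower2_le x X : 0 < X -> x <= log2 X -> Rpower 2 x <= X.
Proof.
  intros HX Hx. unfold Rpower, log2 in *. pose proof ln2_pos.
  assert (x * ln 2 <= ln X).
  { apply (Rmult_le_compat_r (ln 2)) in Hx; [|lra]. unfold Rdiv in Hx.
    rewrite Rmult_assoc, Rinv_l in Hx; lra. }
  rewrite <- (exp_ln X) by auto. destruct (Req_dec (x * ln 2) (ln X)) as [E|E].
  - rewrite E; lra.
  - left. apply exp_increasing. lra.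
Qed.

(* It follows from ln y ≤ y - 1 applied to y = x_j / Σ_j a_j x_j. *)
Lemma log_concavity n a x : (forall j, (j < n)%nat -> 0 <= a j) -> rsum n a = 1 ->
  (forall j, (j < n)%nat -> a j <> 0 -> 0 < x j) ->
  0 < rsum n (fun j => a j * x j) /\
  rsum n (fun j => a j * ln (x j)) <= ln (rsum n (fun j => a j * x j)).
Proof.
  intros Ha Hs Hx. set (m := rsum n (fun j => a j * x j)).
  assert (Hterm : forall j, (j < n)%nat -> 0 <= a j * x j).
  { intros j Hj. destruct (Req_dec (a j) 0) as [Z|Z]; [rewrite Z; lra|].
    pose proof (Ha j Hj). pose proof (Hx j Hj Z). nra. }
  assert (Hm : 0 < m).
  { destruct (Rlt_or_le 0 m) as [|Hle]; auto. exfalso.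
    assert (Hz := rsum_zero_each n _ Hterm Hle).
    assert (Hs0 : rsum n a = 0).
    { rewrite <- (rsum_0 n). apply rsum_ext. intros j Hj.
      destruct (Req_dec (a j) 0) as [Z|Z]; auto.
      specialize (Hz j Hj). pose proof (Hx j Hj Z). simpl in Hz.
      apply Rmult_integral in Hz. lra. }
    lra. }
  split; auto.
  apply Rle_trans with (rsum n (fun j => (ln m - 1) * a j + / m * (a j * x j))).
  - apply rsum_le. intros j Hj. destruct (Req_dec (a j) 0) as [Z|Z].
    + rewrite Z. lra.
    + pose proof (Ha j Hj). pose proof (Hx j Hj Z).
      assert (Hy : ln (x j / m) <= x j / m - 1) by
        (pose proof (exp_ineq1_le (ln (x j / m))); rewrite exp_ln in H1 by (apply Rdiv_lt_0_compat; auto); lra).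
      unfold Rdiv in Hy. rewrite ln_mult, ln_Rinv in Hy by (auto; apply Rinv_0_lt_compat; auto).
      replace ((ln m - 1) * a j + / m * (a j * x j)) with (a j * (ln m - 1 + x j * / m)) by ring.
      apply Rmult_le_compat_l; lra.
  - rewrite rsum_plus, !rsum_scal, Hs. fold m. right. field. lra.
Qed.

Lemma log2_average_le n a p : (forall j, (j < n)%nat -> 0 <= a j) -> rsum n a = 1 ->
  (forall j, (j < n)%nat -> 0 <= p j) -> (forall j, (j < n)%nat -> p j = 0 -> a j = 0) ->
  0 < rsum n (fun j => a j * p j) /\
  rsum n (fun j => log2_pos (p j) * a j) <= log2 (rsum n (fun j => a j * p j)).
Proof.
  intros Ha Hs Hp Hz.
  assert (Hx : forall j, (j < n)%nat -> a j <> 0 -> 0 < p j).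
  { intros j Hj Ha0. destruct (Hp j Hj) as [|E]; auto. exfalso. apply Ha0, Hz; auto. }
  destruct (log_concavity n a p Ha Hs Hx) as [Hm Hc]. split; auto.
  unfold log2. rewrite (rsum_ext n _ (fun j => / ln 2 * (a j * ln (p j)))).
  - rewrite rsum_scal. unfold Rdiv. rewrite Rmult_comm. apply Rmult_le_compat_r; auto.
    left. apply Rinv_0_lt_compat, ln2_pos.
  - intros j Hj. unfold log2_pos, log2. destruct (Rlt_dec 0 (p j)).
    + unfold Rdiv. ring.
    + rewrite (Hz j Hj) by (pose proof (Hp j Hj); lra). ring.
Qed.

Lemma neg_log2_average_le n a p X : (forall j, (j < n)%nat -> 0 <= a j) -> rsum n a = 1 ->
  (forall j, (j < n)%nat -> 0 <= p j) -> (forall j, (j < n)%nat -> p j = 0 -> a j = 0) ->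
  rsum n (fun j => if Rlt_dec 0 (p j) then a j / p j else 0) <= X ->
  - rsum n (fun j => log2_pos (p j) * a j) <= log2 X.
Proof.
  intros Ha Hs Hp Hz HX.
  set (x := fun j => if Rlt_dec 0 (p j) then / p j else 1).
  assert (Hx : forall j, (j < n)%nat -> a j <> 0 -> 0 < x j).
  { intros j Hj _. unfold x. destruct (Rlt_dec 0 (p j)); [apply Rinv_0_lt_compat|]; lra. }
  destruct (log_concavity n a x Ha Hs Hx) as [Hm Hc].
  assert (Hsum : rsum n (fun j => a j * x j) = rsum n (fun j => if Rlt_dec 0 (p j) then a j / p j else 0)).
  { apply rsum_ext. intros j Hj. unfold x. destruct (Rlt_dec 0 (p j)).
    - unfold Rdiv. ring.
    - rewrite (Hz j Hj) by (pose proof (Hp j Hj); lra). ring. }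
  rewrite Hsum in Hm, Hc.
  apply Rle_trans with (log2 (rsum n (fun j => if Rlt_dec 0 (p j) then a j / p j else 0)));
    [|apply log2_le; auto].
  unfold log2. rewrite <- rsum_opp, (rsum_ext n _ (fun j => / ln 2 * (a j * ln (x j)))).
  - rewrite rsum_scal. unfold Rdiv. rewrite Rmult_comm. apply Rmult_le_compat_r; auto.
    left. apply Rinv_0_lt_compat, ln2_pos.
  - intros j Hj. unfold log2_pos, log2, x. destruct (Rlt_dec 0 (p j)).
    + rewrite ln_Rinv by auto. unfold Rdiv. ring.
    + rewrite (Hz j Hj) by (pose proof (Hp j Hj); lra). ring.
Qed.

Lemma Inf_spec E : (exists x, E x) -> (exists b, forall x, E x -> b <= x) -> is_glb E (Inf E).
Proof.
  intros [x0 Hx0] [b Hb]. unfold Inf. apply epsilon_spec.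
  destruct (completeness (fun y => E (- y))) as [l [Hl1 Hl2]].
  - exists (- b). intros y Hy. specialize (Hb _ Hy). lra.
  - exists (- x0). rewrite Ropp_involutive; auto.
  - exists (- l). split.
    + intros x Hx. assert (- x <= l) by (apply Hl1; rewrite Ropp_involutive; auto). lra.
    + intros y Hy. assert (l <= - y). { apply Hl2. intros z Hz. specialize (Hy _ Hz). lra. } lra.
Qed.

Lemma Sup_spec E : (exists x, E x) -> (exists b, forall x, E x -> x <= b) -> is_lub E (Sup E).
Proof.
  intros Hne [b Hb]. unfold Sup. apply epsilon_spec.
  destruct (completeness E) as [l Hl]. exists b; intros y Hy; auto. auto. exists l; auto.
Qed.

Lemma divmod_decompose (N a x : nat) : (x < N)%nat -> ((a * N + x) / N = a /\ (a * N + x) mod N = x)%nat.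
Proof.
  intros. split.
  - symmetry. apply (Nat.div_unique _ N a x); lia.
  - symmetry. apply (Nat.mod_unique _ N a x); lia.
Qed.

Lemma prod_vec_cons d ds phis (a x : nat) : (x < dimprod ds)%nat ->
  prod_vec (d :: ds) phis (a * dimprod ds + x)%nat = Cmul (phis 0%nat a) (prod_vec ds (fun i => phis (S i)) x).
Proof. intros. cbn [prod_vec]. destruct (divmod_decompose _ a x H) as [E1 E2]. rewrite E1, E2. auto. Qed.

Lemma prod_mat_cons d ds rhos (a x a' x' : nat) : (x < dimprod ds)%nat -> (x' < dimprod ds)%nat ->
  prod_mat (d :: ds) rhos (a * dimprod ds + x)%nat (a' * dimprod ds + x')%nat =
  Cmul (rhos 0%nat a a') (prod_mat ds (fun i => rhos (S i)) x x').
Proof.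
  intros. cbn [prod_mat].
  destruct (divmod_decompose _ a x H) as [E1 E2]. destruct (divmod_decompose _ a' x' H0) as [E3 E4].
  rewrite E1, E2, E3, E4. auto.
Qed.

Lemma prod_vec_unit ds : forall phis, (forall i, (i < length ds)%nat -> unit_vec (nth i ds 0%nat) (phis i)) ->
  norm2 (dimprod ds) (prod_vec ds phis) = 1.
Proof.
  induction ds as [|d ds IH]; intros phis Hu.
  - unfold norm2. simpl. unfold Cnorm2; simpl; ring.
  - unfold norm2. cbn [dimprod]. rewrite rsum_mul.
    rewrite (rsum_ext d _ (fun a => Cnorm2 (phis 0%nat a) * norm2 (dimprod ds) (prod_vec ds (fun i => phis (S i))))).
    + rewrite IH.
      * rewrite (rsum_ext d _ (fun a => Cnorm2 (phis 0%nat a))) by (intros; ring).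
        apply (Hu 0%nat). simpl; lia.
      * intros i Hi. apply (Hu (S i)). simpl; lia.
    + intros a Ha. unfold norm2. rewrite <- rsum_scal. apply rsum_ext. intros x Hx.
      rewrite prod_vec_cons by auto. apply Cnorm2_mul.
Qed.

Lemma dimprod_factor_pos ds : (0 < dimprod ds)%nat -> forall i, (i < length ds)%nat -> (0 < nth i ds 0%nat)%nat.
Proof.
  induction ds; simpl; intros. lia.
  destruct i. destruct a; lia. apply IHds. destruct (dimprod ds); lia. lia.
Qed.

Definition basis0 : vec := fun i => if Nat.eqb i 0 then C1 else C0.

Lemma basis0_unit d : (0 < d)%nat -> unit_vec d basis0.
Proof.
  intros. unfold unit_vec. rewrite (rsum_ext d _ (fun i => if Nat.eqb i 0 then 1 else 0)).
  - apply (rsum_single d 0 (fun _ => 1)); auto.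
  - intros. unfold basis0. destruct (Nat.eqb i 0); unfold Cnorm2; simpl; ring.
Qed.

Lemma csum_reorder4 d N (G : nat -> nat -> nat -> nat -> C) :
  csum d (fun a => csum N (fun x => csum d (fun b => csum N (fun y => G a x b y)))) =
  csum N (fun x => csum N (fun y => csum d (fun a => csum d (fun b => G a x b y)))).
Proof.
  rewrite csum_swap. apply csum_ext; intros x Hx.
  etransitivity. { apply csum_ext; intros a Ha. apply csum_swap. }
  apply csum_swap.
Qed.

Lemma csum_reorder5 d N m (F : nat -> nat -> nat -> nat -> nat -> C) :
  csum d (fun a => csum N (fun x => csum d (fun b => csum N (fun y => csum m (fun k => F k a x b y))))) =
  csum m (fun k => csum N (fun x => csum N (fun y => csum d (fun a => csum d (fun b => F k a x b y))))).
Proof.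
  etransitivity.
  { apply csum_ext; intros a Ha. apply csum_ext; intros x Hx. apply csum_ext; intros b Hb. apply csum_swap. }
  etransitivity.
  { apply csum_ext; intros a Ha. apply csum_ext; intros x Hx. apply csum_swap. }
  etransitivity.
  { apply csum_ext; intros a Ha. apply csum_swap. }
  rewrite csum_swap. apply csum_ext; intros k Hk. apply csum_reorder4.
Qed.

(* The operator <v|M|v> on C^N obtained by taking the expectation of M on
   C^d ⊗ C^N in the vector v of the first factor. *)
Definition partial_expectation d N (M : mat) (v : vec) : mat := fun x y =>
  csum d (fun a => csum d (fun b => Cmul (Cmul (Cconj (v a)) (M (a * N + x)%nat (b * N + y)%nat)) (v b))).

Lemma partial_expectation_inner d N M v (Phi Phi' : vec) :
  (forall a x, (a < d)%nat -> (x < N)%nat -> Phi (a * N + x)%nat = Cmul (v a) (Phi' x)) ->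
  inner (d * N) Phi (mat_vec (d * N) M Phi) = inner N Phi' (mat_vec N (partial_expectation d N M v) Phi').
Proof.
  intros HP. unfold inner, mat_vec, partial_expectation. rewrite csum_mul.
  transitivity (csum d (fun a => csum N (fun x => csum d (fun b => csum N (fun y =>
    Cmul (Cmul (Cconj (Phi' x)) (Cmul (Cmul (Cconj (v a)) (M (a * N + x)%nat (b * N + y)%nat)) (v b))) (Phi' y)))))).
  - apply csum_ext; intros a Ha; apply csum_ext; intros x Hx. rewrite csum_mul, HP by auto.
    rewrite <- csum_scal. apply csum_ext; intros b Hb. rewrite <- csum_scal. apply csum_ext; intros y Hy.
    rewrite HP by auto. csolve.
  - rewrite csum_reorder4. apply csum_ext; intros x Hx. rewrite <- csum_scal. apply csum_ext; intros y Hy.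
    rewrite <- csum_scal_r. rewrite <- csum_scal. apply csum_ext; intros a Ha.
    rewrite <- csum_scal_r. rewrite <- csum_scal. apply csum_ext; intros b Hb. csolve.
Qed.

Lemma trace_product_split d N (M P rho P' : mat) (b : nat -> vec) (q : nat -> R) :
  (forall a a' x y, (a < d)%nat -> (a' < d)%nat -> (x < N)%nat -> (y < N)%nat ->
     P (a' * N + y)%nat (a * N + x)%nat = Cmul (rho a' a) (P' y x)) ->
  mat_eq d rho (fun i l => csum d (fun k => Cmul (RtoC (q k)) (outer (b k) (b k) i l))) ->
  trace (d * N) (mat_mul (d * N) M P) =
  csum d (fun k => Cmul (RtoC (q k)) (trace N (mat_mul N (partial_expectation d N M (b k)) P'))).
Proof.
  intros HP Hr. unfold trace, mat_mul, partial_expectation. rewrite csum_mul.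
  transitivity (csum d (fun a => csum N (fun x => csum d (fun a' => csum N (fun y => csum d (fun k =>
    Cmul (RtoC (q k)) (Cmul (Cmul (Cmul (Cconj (b k a)) (M (a * N + x)%nat (a' * N + y)%nat)) (b k a')) (P' y x)))))))).
  - apply csum_ext; intros a Ha; apply csum_ext; intros x Hx. rewrite csum_mul.
    apply csum_ext; intros a' Ha'. apply csum_ext; intros y Hy.
    rewrite HP, Hr by auto. rewrite <- csum_scal_r, <- csum_scal. apply csum_ext; intros k Hk.
    unfold outer. csolve.
  - rewrite csum_reorder5. apply csum_ext; intros k Hk. rewrite <- csum_scal. apply csum_ext; intros x Hx.
    rewrite <- csum_scal. apply csum_ext; intros y Hy. rewrite <- csum_scal_r, <- csum_scal.
    apply csum_ext; intros a Ha. rewrite <- csum_scal_r, <- csum_scal. apply csum_ext; intros a' Ha'. csolve.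
Qed.

(* If <φ|M|φ> ≤ Λ for all unit product vectors φ, then Tr (M ρ) ≤ Λ for every
   product state ρ = ρ_1 ⊗ ... ⊗ ρ_m (induction on the number of factors,
   decomposing ρ_1 spectrally). *)
Lemma product_state_trace_bound ds : forall (rhos : nat -> mat) (M : mat) (Lam : R),
  (forall i, (i < length ds)%nat -> density (nth i ds 0%nat) (rhos i)) ->
  (forall phis, (forall i, (i < length ds)%nat -> unit_vec (nth i ds 0%nat) (phis i)) ->
      re (inner (dimprod ds) (prod_vec ds phis) (mat_vec (dimprod ds) M (prod_vec ds phis))) <= Lam) ->
  re (trace (dimprod ds) (mat_mul (dimprod ds) M (prod_mat ds rhos))) <= Lam.
Proof.
  induction ds as [|d ds IH]; intros rhos M Lam Hd HL.
  - specialize (HL (fun _ _ => C0) (fun i Hi => ltac:(simpl in Hi; lia))).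
    simpl in HL |- *. lra.
  - assert (Hd0 : density d (rhos 0%nat)) by (apply (Hd 0%nat); simpl; lia).
    pose proof Hd0 as [Hh [Hp _]].
    destruct (hermitian_spectral_decomp d (rhos 0%nat) Hh) as [b [q HSD]].
    cbn [dimprod]. set (N := dimprod ds).
    rewrite (trace_product_split d N M (prod_mat (d :: ds) rhos) (rhos 0%nat)
               (prod_mat ds (fun i => rhos (S i))) b q).
    3: destruct HSD; auto.
    2: intros a a' x y Ha Ha' Hx Hy; apply prod_mat_cons; auto.
    rewrite re_csum. apply Rle_trans with (rsum d (fun k => q k * Lam)).
    + apply rsum_le. intros k Hk. rewrite re_RtoC_mul.
      apply Rmult_le_compat_l; [apply (spec_nonneg d (rhos 0%nat) b q HSD k Hp Hk)|].
      apply IH; [intros i Hi; apply (Hd (S i)); simpl; lia|].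
      intros phis Hphis.
      set (phis' := fun i => match i with O => b k | S i' => phis i' end).
      change (dimprod ds) with N.
      rewrite <- (partial_expectation_inner d N M (b k) (prod_vec (d :: ds) phis') (prod_vec ds phis))
        by (intros a x Ha Hx; apply prod_vec_cons; auto).
      apply HL. intros [|i] Hi.
      * apply (spec_unit d _ b q HSD k Hk).
      * apply Hphis. simpl in Hi; lia.
    + rewrite (rsum_ext d _ (fun k => Lam * q k)) by (intros; ring).
      rewrite rsum_scal, (spec_sum1 d (rhos 0%nat) b q HSD Hd0). lra.
Qed.

Lemma separable_trace_bound ds S W Lam : separable ds W ->
  (forall phis, (forall i, (i < length ds)%nat -> unit_vec (nth i ds 0%nat) (phis i)) ->
      re (inner (dimprod ds) (prod_vec ds phis) (mat_vec (dimprod ds) S (prod_vec ds phis))) <= Lam) ->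
  re (trace (dimprod ds) (mat_mul (dimprod ds) S W)) <= Lam.
Proof.
  intros [_ [N [p [rhos [Hp [Hs [Hr HW]]]]]]] HL.
  rewrite (trace_mul_combination _ N S W p (fun j => prod_mat ds (rhos j)) HW), re_csum.
  apply Rle_trans with (rsum N (fun j => p j * Lam)).
  - apply rsum_le. intros j Hj. rewrite re_RtoC_mul. apply Rmult_le_compat_l; auto.
    apply product_state_trace_bound; auto.
  - rewrite (rsum_ext N _ (fun j => Lam * p j)) by (intros; ring). rewrite rsum_scal, Hs. lra.
Qed.

Definition dominates_projector n k (e : nat -> vec) (W : mat) (c0 : R) : Prop :=
  forall u, c0 * rsum k (fun i => Cnorm2 (inner n (e i) u)) <= re (inner n u (mat_vec n W u)).

Section Domination.
Variables (n k : nat) (e : nat -> vec) (W : mat) (c : nat -> vec) (p : nat -> R) (c0 : R).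
Hypotheses (He : orthonormal n k e) (HW : spectral_decomp n W c p) (Hc0 : 0 < c0)
  (Hdom : dominates_projector n k e W c0).

(* If W ≥ c0 P then span e ⊆ supp W: a kernel vector c_j of W satisfies
   c0 |P c_j|^2 ≤ <c_j|W|c_j> = 0, so it is orthogonal to span e. *)
Lemma span_in_support v : in_span n k e v -> in_support n W v.
Proof.
  intros Hv.
  assert (Hz : forall j, (j < n)%nat -> ~ 0 < p j -> inner n (c j) v = C0).
  { intros j Hj Hp. apply (span_orthogonal n k e v (c j) He Hv). intros i Hi.
    set (s := rsum k (fun i => Cnorm2 (inner n (e i) (c j)))).
    assert (Hs : s <= 0).
    { pose proof (Hdom (c j)) as Hd. rewrite (spec_eigenvalue n W c p HW j Hj) in Hd.
      fold s in Hd. destruct (Rle_or_lt s 0); auto. nra. }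
    pose proof (rsum_zero_each k _ (fun i _ => Cnorm2_nonneg (inner n (e i) (c j))) Hs i Hi) as Z.
    apply Cnorm2_zero in Z. rewrite inner_conj, Z. csolve. }
  exists n, (fun j => if Rlt_dec 0 (p j) then c j else (fun _ => C0)),
    (fun j => if Rlt_dec 0 (p j) then RtoC (p j) else C1), (fun j => inner n (c j) v).
  split.
  - intros j Hj. destruct (Rlt_dec 0 (p j)).
    + split. apply RtoC_neq0; lra. apply (spec_eigenvector n W c p HW j Hj).
    + split. intro E. apply (f_equal re) in E. simpl in E. lra.
      intros i Hi. unfold mat_vec. rewrite (csum_ext n _ (fun _ => C0)) by (intros; csolve).
      rewrite csum_0. csolve.
  - intros i Hi. rewrite (basis_expansion n c v) by (destruct HW; auto). apply csum_ext. intros j Hj.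
    destruct (Rlt_dec 0 (p j)). auto. rewrite Hz by auto. csolve.
Qed.

(* If W ≥ c0 P then <v|W^(-1)|v> ≤ 1/c0 for unit vectors v in span e.
   With u = W^(-1) v and Q = <u|W|u> = <u|v>, expanding
   0 ≤ |v - c0 P u|^2 gives 0 ≤ 1 - 2 c0 Q + c0^2 |P u|^2 ≤ 1 - c0 Q. *)
Lemma inverse_expectation_bound v : in_span n k e v -> norm2 n v = 1 ->
  rsum n (fun j => if Rlt_dec 0 (p j) then Cnorm2 (inner n (c j) v) / p j else 0) <= / c0.
Proof.
  intros [g Hg] Hv1.
  set (Q := rsum n (fun j => if Rlt_dec 0 (p j) then Cnorm2 (inner n (c j) v) / p j else 0)).
  set (coef := fun j => if Rlt_dec 0 (p j) then Cmul (RtoC (/ p j)) (inner n (c j) v) else C0).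
  set (u := fun i => csum n (fun j => Cmul (coef j) (c j i))).
  assert (Hcu : forall j, (j < n)%nat -> inner n (c j) u = coef j)
    by (intros; apply (orthonormal_coord n n c); auto; destruct HW; auto).
  assert (HuWu : re (inner n u (mat_vec n W u)) = Q).
  { rewrite (spec_quadratic n W c p HW). unfold Q. apply rsum_ext. intros j Hj. rewrite Hcu by auto.
    unfold coef. destruct (Rlt_dec 0 (p j)).
    - rewrite Cnorm2_mul. unfold Cnorm2 at 1; simpl. field; intro; lra.
    - unfold Cnorm2; simpl; ring. }
  assert (Huv : re (inner n u v) = Q).
  { unfold u. rewrite inner_lin_l, re_csum. unfold Q. apply rsum_ext. intros j Hj.
    unfold coef. destruct (Rlt_dec 0 (p j)).
    - unfold Cnorm2; simpl. field; intro; lra.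
    - simpl; ring. }
  assert (Huv' : inner n u v = csum k (fun i => Cmul (g i) (Cconj (inner n (e i) u)))).
  { rewrite (inner_ext n u u v _ (fun i _ => eq_refl) Hg), inner_lin_r. apply csum_ext. intros.
    rewrite (inner_conj n (e i) u). auto. }
  assert (Hg1 : rsum k (fun i => Cnorm2 (g i)) = 1) by (rewrite <- (span_norm n k e v g He Hg); auto).
  pose proof (Hdom u) as Hdu. rewrite HuWu in Hdu.
  assert (Hsq : 0 <= rsum k (fun i => Cnorm2 (Cadd (g i) (Cmul (RtoC (- c0)) (inner n (e i) u))))).
  { apply rsum_nonneg. intros. apply Cnorm2_nonneg. }
  rewrite (rsum_ext k _ (fun i => Cnorm2 (g i) + (-2 * c0) * re (Cmul (g i) (Cconj (inner n (e i) u)))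
     + (c0 * c0) * Cnorm2 (inner n (e i) u))) in Hsq by (intros; unfold Cnorm2; simpl; ring).
  rewrite !rsum_plus, !rsum_scal, <- re_csum, <- Huv', Huv, Hg1 in Hsq.
  assert (c0 * Q <= 1) by nra.
  apply (Rmult_le_reg_l c0); auto. rewrite Rinv_r; lra.
Qed.

End Domination.

Definition maximally_mixed (d : nat) : mat := fun a b => if Nat.eqb a b then RtoC (/ INR d) else C0.

Lemma maximally_mixed_quadratic d v : re (inner d v (mat_vec d (maximally_mixed d) v)) = / INR d * norm2 d v.
Proof.
  assert (Hv : vec_eq d (mat_vec d (maximally_mixed d) v) (fun i => Cmul (RtoC (/ INR d)) (v i))).
  { intros i Hi. unfold mat_vec, maximally_mixed.
    rewrite (csum_ext d _ (fun j => if Nat.eqb j i then Cmul (RtoC (/ INR d)) (v j) else C0)).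
    - apply csum_single; auto.
    - intros j Hj. rewrite Nat.eqb_sym. destruct (Nat.eqb j i); csolve. }
  rewrite (inner_ext d v v _ _ (fun i _ => eq_refl) Hv), inner_scal_r. simpl.
  rewrite re_inner_self. ring.
Qed.

Lemma maximally_mixed_trace d : (0 < d)%nat -> trace d (maximally_mixed d) = C1.
Proof.
  intros. unfold trace, maximally_mixed. rewrite (csum_ext d _ (fun _ => RtoC (/ INR d))).
  - apply C_eq; rewrite ?re_csum, ?im_csum; simpl.
    + rewrite rsum_const. field. apply not_0_INR; lia.
    + apply rsum_0.
  - intros. rewrite Nat.eqb_refl. auto.
Qed.

Lemma maximally_mixed_density d : (0 < d)%nat -> density d (maximally_mixed d).
Proof.
  intros Hd. split; [|split].
  - intros i j _ _. unfold maximally_mixed. rewrite Nat.eqb_sym. destruct (Nat.eqb j i); csolve.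
  - intros v. rewrite maximally_mixed_quadratic. apply Rmult_le_pos.
    + left; apply Rinv_0_lt_compat, lt_0_INR; auto.
    + apply norm2_nonneg.
  - apply maximally_mixed_trace; auto.
Qed.

Lemma prod_maximally_mixed ds : (0 < dimprod ds)%nat -> forall a b, (a < dimprod ds)%nat -> (b < dimprod ds)%nat ->
  prod_mat ds (fun i => maximally_mixed (nth i ds 0%nat)) a b = maximally_mixed (dimprod ds) a b.
Proof.
  induction ds as [|d ds IH]; intros Hpos a b Ha Hb.
  - simpl in Ha, Hb. assert (a = 0%nat) by lia. assert (b = 0%nat) by lia. subst.
    unfold maximally_mixed; simpl. apply C_eq; simpl; auto. rewrite Rinv_1; auto.
  - cbn [prod_mat]. cbn [dimprod] in *. set (N := dimprod ds) in *.
    assert (HN : (0 < N)%nat) by (destruct N; lia).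
    assert (Hd : (0 < d)%nat) by (destruct d; lia).
    change (fun i => maximally_mixed (nth (S i) (d :: ds) 0%nat)) with (fun i => maximally_mixed (nth i ds 0%nat)).
    rewrite IH by (auto; apply Nat.mod_upper_bound; lia).
    simpl nth. unfold maximally_mixed.
    pose proof (Nat.div_mod_eq a N). pose proof (Nat.div_mod_eq b N).
    destruct (Nat.eqb_spec (a / N) (b / N)), (Nat.eqb_spec (a mod N) (b mod N)), (Nat.eqb_spec a b);
      try (exfalso; subst; lia); try (rewrite e, e0 in H; lia); try csolve.
    apply C_eq; simpl; try ring. rewrite mult_INR. field. split; apply not_0_INR; lia.
Qed.

Lemma density_ext n A B : mat_eq n A B -> density n B -> density n A.
Proof.
  intros H [Hh [Hp Ht]]. split; [|split].
  - intros i j Hi Hj. rewrite !H by auto. apply Hh; auto.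
  - intros v. rewrite (inner_ext n v v _ (mat_vec n B v) (fun i _ => eq_refl)
                        (mat_vec_ext n A B v v H (fun i _ => eq_refl))). apply Hp.
  - rewrite <- Ht. unfold trace. apply csum_ext. intros. apply H; auto.
Qed.

Lemma separable_ext ds A B : mat_eq (dimprod ds) A B -> separable ds B -> separable ds A.
Proof.
  intros H [Hd [N [p [rhos [H1 [H2 [H3 H4]]]]]]]. split. apply (density_ext _ A B H Hd).
  exists N, p, rhos. split; auto. split; auto. split; auto. intros i j Hi Hj. rewrite H by auto. apply H4; auto.
Qed.

Lemma maximally_mixed_separable ds : (0 < dimprod ds)%nat -> separable ds (maximally_mixed (dimprod ds)).
Proof.
  intros Hpos. split. apply maximally_mixed_density; auto.
  exists 1%nat, (fun _ => 1), (fun _ i => maximally_mixed (nth i ds 0%nat)). split; [|split; [|split]].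
  - intros; lra.
  - simpl; ring.
  - intros j i _ Hi. apply maximally_mixed_density. apply dimprod_factor_pos; auto.
  - intros a b Ha Hb. simpl. rewrite prod_maximally_mixed by auto. csolve.
Qed.

Definition robustness_set (ds : list nat) (rho : mat) (t : R) : Prop :=
  0 <= t /\ exists tau, density (dimprod ds) tau /\
    separable ds (mat_scale (RtoC (/ (1 + t))) (mat_add rho (mat_scale (RtoC t) tau))).

(* The robustness of any state ρ ≤ I is finite: with t = n = dim H,
   τ = ((1+t)/t) I/n - ρ/t is a state and (ρ + tτ)/(1+t) = I/n is separable. *)
Lemma robustness_set_nonempty ds rho : (0 < dimprod ds)%nat ->
  hermitian (dimprod ds) rho -> trace (dimprod ds) rho = C1 ->
  (forall v, re (inner (dimprod ds) v (mat_vec (dimprod ds) rho v)) <= norm2 (dimprod ds) v) ->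
  exists t, robustness_set ds rho t.
Proof.
  intros Hn Hh Htr Hle. unfold robustness_set. set (n := dimprod ds) in *. set (t := INR n).
  assert (Ht : 1 <= t) by (unfold t; apply (le_INR 1); lia).
  set (tau := mat_add (mat_scale (RtoC ((1 + t) / t)) (maximally_mixed n)) (mat_scale (RtoC (- / t)) rho)).
  exists t. split; [lra|]. exists tau. split.
  - split; [|split].
    + intros i l Hi Hl. unfold tau, mat_add, mat_scale. rewrite (Hh i l Hi Hl).
      unfold maximally_mixed. rewrite Nat.eqb_sym. destruct (Nat.eqb l i); csolve.
    + intros v. unfold tau. rewrite inner_madd, !inner_mscale.
      rewrite re_Cadd, !re_RtoC_mul, maximally_mixed_quadratic. fold t.
      pose proof (Hle v). pose proof (norm2_nonneg n v).
      assert (0 < / t) by (apply Rinv_0_lt_compat; lra).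
      replace ((1 + t) / t * (/ t * norm2 n v) + - / t * re (inner n v (mat_vec n rho v)))
        with (/ t * ((norm2 n v - re (inner n v (mat_vec n rho v))) + / t * norm2 n v)) by (field; lra).
      apply Rmult_le_pos; [lra|]. nra.
    + unfold tau. rewrite trace_madd, !trace_mscale, maximally_mixed_trace, Htr by auto.
      apply C_eq; simpl; try ring. field. lra.
  - apply (separable_ext ds _ (maximally_mixed n)).
    + intros i l Hi Hl. unfold tau, mat_scale, mat_add. apply C_eq; simpl; field; lra.
    + apply maximally_mixed_separable; auto.
Qed.

Definition subspace_state (k : nat) (e : nat -> vec) : mat := mat_scale (RtoC (/ INR k)) (projector k e).

Lemma projector_quadratic n k e u :
  re (inner n u (mat_vec n (projector k e) u)) = rsum k (fun j => Cnorm2 (inner n (e j) u)).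
Proof.
  rewrite (inner_mat_vec_dyadic n k (projector k e) (fun _ => C1) e e u u).
  - rewrite re_csum. apply rsum_ext. intros j Hj. rewrite (inner_conj n (e j) u). unfold Cnorm2; simpl; ring.
  - intros i l _ _. unfold projector. apply csum_ext. intros; csolve.
Qed.

Lemma subspace_state_quadratic n k e u : re (inner n u (mat_vec n (subspace_state k e) u)) =
  / INR k * rsum k (fun j => Cnorm2 (inner n (e j) u)).
Proof. unfold subspace_state. rewrite inner_mscale, re_RtoC_mul, projector_quadratic. auto. Qed.

Lemma subspace_state_hermitian n k e : hermitian n (subspace_state k e).
Proof.
  intros i l _ _. unfold subspace_state, mat_scale, projector.
  assert (Hre : rsum k (fun j => re (outer (e j) (e j) i l)) = rsum k (fun j => re (outer (e j) (e j) l i)))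
    by (apply rsum_ext; intros; unfold outer; simpl; ring).
  assert (Him : rsum k (fun j => im (outer (e j) (e j) i l)) = - rsum k (fun j => im (outer (e j) (e j) l i))).
  { rewrite <- rsum_opp. apply rsum_ext; intros; unfold outer; simpl; ring. }
  apply C_eq; simpl; rewrite !re_csum, !im_csum, Hre, Him; ring.
Qed.

Lemma subspace_state_trace n k e : (0 < k)%nat -> orthonormal n k e -> trace n (subspace_state k e) = C1.
Proof.
  intros Hk He. unfold subspace_state. rewrite trace_mscale. unfold trace, projector.
  rewrite csum_swap, (csum_ext k _ (fun _ => C1)).
  - rewrite csum_C1. apply C_eq; simpl; try ring. field. apply not_0_INR; lia.
  - intros j Hj. transitivity (inner n (e j) (e j)).
    + unfold inner. apply csum_ext; intros. unfold outer. csolve.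
    + rewrite He, Nat.eqb_refl; auto.
Qed.

(* ρ ≤ I, by Bessel's inequality and k ≥ 1. *)
Lemma subspace_state_le_identity n k e v : (0 < k)%nat -> orthonormal n k e ->
  re (inner n v (mat_vec n (subspace_state k e) v)) <= norm2 n v.
Proof.
  intros Hk He. rewrite subspace_state_quadratic.
  pose proof (bessel n k e v He).
  assert (Hs : 0 <= rsum k (fun j => Cnorm2 (inner n (e j) v)))
    by (apply rsum_nonneg; intros; apply Cnorm2_nonneg).
  assert (H1 : 1 <= INR k) by (apply (le_INR 1); lia).
  assert (/ INR k <= 1) by (rewrite <- Rinv_1; apply Rinv_le_contravar; lra).
  assert (0 < / INR k) by (apply Rinv_0_lt_compat; lra).
  nra.
Qed.

Lemma robustness_mixture_dominates n k e tau t : (0 < k)%nat -> 0 <= t -> psd n tau ->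
  dominates_projector n k e (mat_scale (RtoC (/ (1 + t))) (mat_add (subspace_state k e) (mat_scale (RtoC t) tau)))
    (/ ((1 + t) * INR k)).
Proof.
  intros Hk Ht Htau u. rewrite inner_mscale, re_RtoC_mul, inner_madd, re_Cadd, inner_mscale, re_RtoC_mul.
  rewrite subspace_state_quadratic, Rinv_mult.
  assert (0 < / (1 + t)) by (apply Rinv_0_lt_compat; lra).
  assert (0 <= t * re (inner n u (mat_vec n tau u))) by (apply Rmult_le_pos; auto).
  set (s := rsum k (fun j => Cnorm2 (inner n (e j) u))). nra.
Qed.

Lemma orthonormal_dim_pos n k e : (0 < k)%nat -> orthonormal n k e -> (0 < n)%nat.
Proof.
  intros Hk He. destruct n; [|lia]. exfalso.
  pose proof (He 0%nat 0%nat Hk Hk) as H. simpl in H. injection H. lra.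
Qed.

Definition rel_entropy_set (ds : list nat) (sigma : mat) (x : R) : Prop :=
  exists w, separable ds w /\
    (forall v, in_support (dimprod ds) sigma v -> in_support (dimprod ds) w v) /\
    exists Ls Lw, is_log2_mat (dimprod ds) sigma Ls /\ is_log2_mat (dimprod ds) w Lw /\
      x = re (trace (dimprod ds) (mat_mul (dimprod ds) sigma (mat_sub Ls Lw))).

Section EntropyBounds.
Variables (ds : list nat) (k : nat) (e : nat -> vec) (sigma : mat) (b : nat -> vec) (q : nat -> R).
Local Notation n := (dimprod ds).
Local Notation rho := (subspace_state k e).
Hypotheses (Hk : (0 < k)%nat) (He : orthonormal n k e) (Hd : density n sigma)
  (HS : spectral_decomp n sigma b q)
  (Hsupp : forall v, in_support n sigma v <-> in_span n k e v).

Lemma robustness_nonempty : exists t, robustness_set ds rho t.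
Proof.
  apply robustness_set_nonempty.
  - apply (orthonormal_dim_pos n k e Hk He).
  - apply subspace_state_hermitian.
  - apply (subspace_state_trace n k e Hk He).
  - intros v. apply (subspace_state_le_identity n k e v Hk He).
Qed.

Lemma robustness_glb : is_glb (robustness_set ds rho) (Rg ds rho).
Proof. apply Inf_spec; [apply robustness_nonempty|]. exists 0. intros t [Ht _]; auto. Qed.

Lemma separable_weights W c p : separable ds W -> spectral_decomp n W c p ->
  (forall v, in_support n sigma v -> in_support n W v) ->
  (forall j, (j < n)%nat -> 0 <= state_weight n b q c j) /\
  rsum n (fun j => state_weight n b q c j) = 1 /\
  (forall j, (j < n)%nat -> 0 <= p j) /\ (forall j, (j < n)%nat -> p j <= 1) /\
  (forall j, (j < n)%nat -> p j = 0 -> state_weight n b q c j = 0).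
Proof.
  intros [HdW _] HW Hsup. pose proof HdW as [_ [HpW _]]. pose proof Hd as [_ [Hp _]].
  split; [intros; apply state_weight_nonneg; intros; apply (spec_nonneg n sigma b q HS); auto|].
  split; [apply (state_weight_sum n sigma b q c Hd HS); destruct HW; auto|].
  split; [intros; apply (spec_nonneg n W c p HW); auto|].
  split; [intros; apply (spec_le1 n W c p HW); auto|].
  intros; apply (state_weight_kernel n sigma b q W c p); auto.
Qed.

Lemma rel_entropy_set_elem x : rel_entropy_set ds sigma x ->
  exists W c p, separable ds W /\ spectral_decomp n W c p /\
    (forall v, in_support n sigma v -> in_support n W v) /\
    x + vN_entropy n sigma = - rsum n (fun j => log2_pos (p j) * state_weight n b q c j).
Proof.
  intros [W [Hsep [Hsup [Ls [Lw [HLs [[c [p [HW HLw]]] ->]]]]]]].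
  exists W, c, p. split; [|split; [|split]]; auto.
  exact (rel_entropy_formula n sigma b q Ls W c p Lw HS HLs HW HLw).
Qed.

Lemma rel_entropy_set_intro W c p : separable ds W -> spectral_decomp n W c p ->
  (forall v, in_support n sigma v -> in_support n W v) ->
  rel_entropy_set ds sigma (- vN_entropy n sigma - rsum n (fun j => log2_pos (p j) * state_weight n b q c j)).
Proof.
  intros Hsep HW Hsup. exists W. split; auto. split; auto.
  exists (fun i l => csum n (fun j => Cmul (RtoC (log2_pos (q j))) (outer (b j) (b j) i l))),
         (fun i l => csum n (fun j => Cmul (RtoC (log2_pos (p j))) (outer (c j) (c j) i l))).
  split; [apply (log2_mat_of_spectral n sigma b q HS)|].
  split; [apply (log2_mat_of_spectral n W c p HW)|].
  assert (E := rel_entropy_formula n sigma b q _ W c p _ HS (log2_mat_of_spectral n sigma b q HS) HW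
                 (fun i l _ _ => eq_refl)).
  lra.
Qed.

Lemma robustness_feasible_bound t : robustness_set ds rho t ->
  exists W c p, separable ds W /\ spectral_decomp n W c p /\
    (forall v, in_support n sigma v -> in_support n W v) /\
    rsum n (fun j => if Rlt_dec 0 (p j) then state_weight n b q c j / p j else 0) <= (1 + t) * INR k.
Proof.
  intros [Ht [tau [Htau Hsep]]].
  set (W := mat_scale (RtoC (/ (1 + t))) (mat_add rho (mat_scale (RtoC t) tau))) in *.
  pose proof Hsep as [[HhW _] _].
  destruct (hermitian_spectral_decomp n W HhW) as [c [p HW]].
  assert (Hk1 : 1 <= INR k) by (apply (le_INR 1); lia).
  set (c0 := / ((1 + t) * INR k)).
  assert (Hc0 : 0 < c0) by (apply Rinv_0_lt_compat; nra).
  assert (Hdom : dominates_projector n k e W c0)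
    by (destruct Htau as [_ [Hptau _]]; apply robustness_mixture_dominates; auto).
  assert (Hsup : forall v, in_support n sigma v -> in_support n W v)
    by (intros v Hv; apply (span_in_support n k e W c p c0); auto; apply Hsupp; auto).
  exists W, c, p. split; [|split; [|split]]; auto.
  replace ((1 + t) * INR k) with (/ c0) by (unfold c0; rewrite Rinv_inv; auto).
  unfold state_weight.
  rewrite (rsum_ext n _ (fun j => rsum n (fun l => q l *
             (if Rlt_dec 0 (p j) then Cnorm2 (inner n (c j) (b l)) / p j else 0)))).
  2:{ intros j Hj. destruct (Rlt_dec 0 (p j)) as [Hpj|Hpj].
      - unfold Rdiv. rewrite Rmult_comm, <- rsum_scal. apply rsum_ext. intros l Hl.
        rewrite (inner_conj n (c j) (b l)), Cnorm2_conj. ring.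
      - rewrite (rsum_ext n _ (fun _ => 0)) by (intros; ring). rewrite rsum_0; auto. }
  rewrite rsum_swap. apply Rle_trans with (rsum n (fun l => q l * / c0)).
  - apply rsum_le. intros l Hl. rewrite rsum_scal.
    destruct (Req_dec (q l) 0) as [Z|NZ]; [rewrite Z; lra|].
    apply Rmult_le_compat_l; [apply (spec_nonneg n sigma b q HS); destruct Hd as [_ [Hp _]]; auto|].
    apply (inverse_expectation_bound n k e W c p c0); auto.
    + apply Hsupp. apply (eigenvector_in_support n sigma b q HS); auto.
    + apply (spec_unit n sigma b q HS); auto.
  - rewrite (rsum_ext n _ (fun l => / c0 * q l)) by (intros; ring).
    rewrite rsum_scal, (spec_sum1 n sigma b q HS Hd). lra.
Qed.

(* The E_R set is nonempty and bounded below by -S(σ), so E_R(σ) is its infimum. *)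
Lemma rel_entropy_glb : is_glb (rel_entropy_set ds sigma) (E_R ds sigma).
Proof.
  apply Inf_spec.
  - destruct robustness_nonempty as [t Ht].
    destruct (robustness_feasible_bound t Ht) as [W [c [p [Hsep [HW [Hsup _]]]]]].
    eexists. apply (rel_entropy_set_intro W c p); auto.
  - exists (- vN_entropy n sigma). intros x Hx.
    destruct (rel_entropy_set_elem x Hx) as [W [c [p [Hsep [HW [Hsup Hx']]]]]].
    destruct (separable_weights W c p Hsep HW Hsup) as [Ha [_ [_ [Hp1 _]]]].
    assert (rsum n (fun j => log2_pos (p j) * state_weight n b q c j) <= 0).
    { rewrite <- (rsum_0 n). apply rsum_le. intros j Hj.
      pose proof (log2_pos_nonpos (p j) (Hp1 j Hj)). pose proof (Ha j Hj). nra. }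
    lra.
Qed.

Lemma robustness_upper_bound : Rpower 2 (E_R ds sigma + vN_entropy n sigma) <= INR k * (1 + Rg ds rho).
Proof.
  assert (Hk1 : 1 <= INR k) by (apply (le_INR 1); lia).
  assert (Hfeas : forall t, robustness_set ds rho t ->
            Rpower 2 (E_R ds sigma + vN_entropy n sigma) / INR k - 1 <= t).
  { intros t Ht. destruct (robustness_feasible_bound t Ht) as [W [c [p [Hsep [HW [Hsup Hb]]]]]].
    destruct (separable_weights W c p Hsep HW Hsup) as [Ha [Hs [Hp0 [_ Hz]]]].
    pose proof (proj1 rel_entropy_glb _ (rel_entropy_set_intro W c p Hsep HW Hsup)) as Hle.
    pose proof (neg_log2_average_le n _ p _ Ha Hs Hp0 Hz Hb) as Hlog.
    destruct Ht as [Ht _].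
    assert (HX : 0 < (1 + t) * INR k) by nra.
    assert (H2 : Rpower 2 (E_R ds sigma + vN_entropy n sigma) <= (1 + t) * INR k)
      by (apply Rpower2_le; auto; lra).
    apply (Rmult_le_compat_r (/ INR k)) in H2; [|left; apply Rinv_0_lt_compat; lra].
    replace ((1 + t) * INR k * / INR k) with (1 + t) in H2 by (field; lra). unfold Rdiv. lra. }
  pose proof (proj2 robustness_glb _ Hfeas) as Hr.
  apply (Rmult_le_compat_l (INR k)) in Hr; [|lra].
  replace (INR k * (Rpower 2 (E_R ds sigma + vN_entropy n sigma) / INR k - 1))
    with (Rpower 2 (E_R ds sigma + vN_entropy n sigma) - INR k) in Hr by (field; lra).
  lra.
Qed.

End EntropyBounds.

Definition product_expectation_set (ds : list nat) (sigma : mat) (x : R) : Prop :=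
  exists phis : nat -> vec,
    (forall i, (i < length ds)%nat -> unit_vec (nth i ds 0%nat) (phis i)) /\
    x = re (inner (dimprod ds) (prod_vec ds phis) (mat_vec (dimprod ds) sigma (prod_vec ds phis))).

Section GeometricBound.
Variables (ds : list nat) (sigma : mat) (b : nat -> vec) (q : nat -> R).
Local Notation n := (dimprod ds).
Hypotheses (Hn : (0 < n)%nat) (Hd : density n sigma) (HS : spectral_decomp n sigma b q).

(* The product expectations lie in [0, 1], so their supremum exists. *)
Lemma product_expectation_lub : is_lub (product_expectation_set ds sigma) (Sup (product_expectation_set ds sigma)).
Proof.
  apply Sup_spec.
  - eexists. exists (fun _ => basis0). split; [|reflexivity].
    intros i Hi. apply basis0_unit, dimprod_factor_pos; auto.
  - exists 1. intros x [phis [Hu ->]]. rewrite (spec_quadratic n sigma b q HS).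
    apply Rle_trans with (rsum n (fun j => Cnorm2 (inner n (b j) (prod_vec ds phis)))).
    + apply rsum_le. intros j Hj. pose proof (spec_le1 n sigma b q HS j Hd Hj).
      pose proof (Cnorm2_nonneg (inner n (b j) (prod_vec ds phis))). nra.
    + rewrite <- (parseval n b) by (destruct HS; auto). rewrite prod_vec_unit; auto. lra.
Qed.

(* Second inequality: G(σ) ≤ E_R(σ) + S(σ).  For ω in the E_R set,
   E_R-term + S = - Σ_j a_j log2 p_j ≥ - log2 Tr σω ≥ - log2 max_φ <φ|σ|φ>. *)
Lemma geometric_lower_bound e k : (0 < k)%nat -> orthonormal n k e ->
  (forall v, in_support n sigma v <-> in_span n k e v) ->
  G_measure ds sigma <= E_R ds sigma + vN_entropy n sigma.
Proof.
  intros Hk He Hsupp.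
  set (M := Sup (product_expectation_set ds sigma)).
  assert (Hlow : forall x, rel_entropy_set ds sigma x -> G_measure ds sigma - vN_entropy n sigma <= x).
  { intros x Hx.
    destruct (rel_entropy_set_elem ds sigma b q HS x Hx) as [W [c [p [Hsep [HW [Hsup Hx']]]]]].
    destruct (separable_weights ds sigma b q Hd HS W c p Hsep HW Hsup) as [Ha [Hs [Hp0 [_ Hz]]]].
    destruct (log2_average_le n _ p Ha Hs Hp0 Hz) as [Hm Hlog].
    assert (Htr : rsum n (fun j => state_weight n b q c j * p j) <= M).
    { assert (E : re (trace n (mat_mul n sigma W)) = rsum n (fun j => state_weight n b q c j * p j)).
      { rewrite (trace_mul_spectral_fun n sigma W c p (fun x => x) W HW (proj2 HW)).
        apply rsum_ext. intros j Hj. rewrite (state_weight_eq n sigma b q c j HS). ring. }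
      rewrite <- E. apply separable_trace_bound; auto.
      intros phis Hu. apply (proj1 product_expectation_lub). exists phis; auto. }
    assert (HG : G_measure ds sigma = - log2 M) by reflexivity.
    pose proof (log2_le _ _ Hm Htr). lra. }
  pose proof (proj2 (rel_entropy_glb ds k e sigma b q Hk He Hd HS Hsupp) _ Hlow). lra.
Qed.

End GeometricBound.

Theorem mainTheorem10 (ds : list nat) (k : nat) (e : nat -> vec) (sigma2 : mat) :
  (0 < length ds)%nat ->
  (0 < k)%nat ->
  orthonormal (dimprod ds) k e ->
  density (dimprod ds) sigma2 ->
  (forall v, in_support (dimprod ds) sigma2 v <-> in_span (dimprod ds) k e v) ->
  let rho := mat_scale (RtoC (/ INR k)) (projector k e) in
  let r := INR k * (1 + Rg ds rho) in
  r >= Rpower 2 (E_R ds sigma2 + vN_entropy (dimprod ds) sigma2) /\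
  Rpower 2 (E_R ds sigma2 + vN_entropy (dimprod ds) sigma2) >= Rpower 2 (G_measure ds sigma2).
Proof.
  intros _ Hk He Hd Hsupp rho r.
  pose proof Hd as [Hh _].
  destruct (hermitian_spectral_decomp _ sigma2 Hh) as [b [q HS]].
  split; apply Rle_ge.
  - exact (robustness_upper_bound ds k e sigma2 b q Hk He Hd HS Hsupp).
  - apply Rle_Rpower; [lra|].
    apply (geometric_lower_bound ds sigma2 b q (orthonormal_dim_pos _ k e Hk He) Hd HS e k Hk He Hsupp).
Qed.
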